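(* Consider the system of ordinary differential equations for $(x(t),h(t),n(t))$: \[ \frac{dx}{dt} = x(1-x)S(h) + \mu(h)(1-x) - \nu x,\qquad \frac{dh}{dt} = \alpha n(1+\beta x)\,G(h) - \Gamma(n)(h-1),\qquad \frac{dn}{dt} = r n(1-n) - D(h,x)\,n, \] where \[ S(h) = \frac{s_0}{1+e^{-\lambda(h-h_c)}} - c + \varphi\, d_S(h),\quad d_S(h) = \frac{d_{\max} h^m}{h_{50}^m + h^m},\quad \mu(h)=\mu_0 h^p, \] \[ G(h) = \frac{K_g}{K_g+h},\quad \Gamma(n) = \frac{\gamma_0}{1+\eta n},\quad D(h,x) = (1-\varphi x)\,d_S(h), \] and all parameters $s_0,\lambda,h_c,c,\varphi,d_{\max},h_{50},m,\mu_0,p,\nu,\alpha,\beta,K_g,\gamma_0,\eta,r$ are positive. Let $x^*\in(0,1)$ be the unique solution in $(0,1)$ of $x(1-x)S(1) + \mu_0(1-x) - \nu x = 0$, so that $E_0 = (x^*,1,0)$ is an equilibrium of the system. Define $\mathcal{R}_0 = \dfrac{r}{D(1,x^* )}$. Then $E_0$ is locally asymptotically stable if $\mathcal{R}_0<1$ and unstable if $\mathcal{R}_0>1$.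
   Context: The model describes a tumor: $x$ is the fraction of acid-resistant cells, $h$ is the normalized proton concentration ($h=1$ physiological), $n$ is normalized tumor density. $E_0$ is the tumor-extinction equilibrium and $\mathcal{R}_0$ is called the basic reproduction number of the tumor cell population.
   Formalization: The death rate $D(1,x^* )$ is also assumed positive, that is $\varphi x^* < 1$. The statement above fails without it. *)

From Stdlib Require Import Reals.
From Coquelicot Require Import Coquelicot.
Open Scope R_scope.

Record params := Params {
  s0 : R; lam : R; hc : R; c : R; phi : R; dmax : R; h50 : R; m : R;
  mu0 : R; p : R; nu : R; alpha : R; beta : R; Kg : R; gamma0 : R;
  eta : R; r : R }.

Definition params_pos (P : params) : Prop :=
  0 < s0 P /\ 0 < lam P /\ 0 < hc P /\ 0 < c P /\ 0 < phi P /\ 0 < dmax P /\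
  0 < h50 P /\ 0 < m P /\ 0 < mu0 P /\ 0 < p P /\ 0 < nu P /\ 0 < alpha P /\
  0 < beta P /\ 0 < Kg P /\ 0 < gamma0 P /\ 0 < eta P /\ 0 < r P.

(* h^m, h^p with real exponents, via Rpower (meaningful for h > 0). *)
Definition dS (P : params) (h : R) : R :=
  dmax P * Rpower h (m P) / (Rpower (h50 P) (m P) + Rpower h (m P)).
Definition S (P : params) (h : R) : R :=
  s0 P / (1 + exp (- lam P * (h - hc P))) - c P + phi P * dS P h.
Definition mu (P : params) (h : R) : R := mu0 P * Rpower h (p P).
Definition G (P : params) (h : R) : R := Kg P / (Kg P + h).
Definition Gam (P : params) (n : R) : R := gamma0 P / (1 + eta P * n).
Definition Dfun (P : params) (h x : R) : R := (1 - phi P * x) * dS P h.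

Definition fx (P : params) (x h n : R) : R :=
  x * (1 - x) * S P h + mu P h * (1 - x) - nu P * x.
Definition fh (P : params) (x h n : R) : R :=
  alpha P * n * (1 + beta P * x) * G P h - Gam P n * (h - 1).
Definition fn (P : params) (x h n : R) : R :=
  r P * n * (1 - n) - Dfun P h x * n.

Definition Rnum0 (P : params) (xs : R) : R := r P / Dfun P 1 xs.

Definition dist3 (x h n xs hs ns : R) : R :=
  sqrt ((x - xs) ^ 2 + (h - hs) ^ 2 + (n - ns) ^ 2).

Definition sol_on (P : params) (T : R) (x h n : R -> R) : Prop :=
  forall t, 0 <= t < T ->
    is_derive x t (fx P (x t) (h t) (n t)) /\
    is_derive h t (fh P (x t) (h t) (n t)) /\
    is_derive n t (fn P (x t) (h t) (n t)).

Definition sol_global (P : params) (x h n : R -> R) : Prop :=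
  forall t, 0 <= t ->
    is_derive x t (fx P (x t) (h t) (n t)) /\
    is_derive h t (fh P (x t) (h t) (n t)) /\
    is_derive n t (fn P (x t) (h t) (n t)).

Definition lyap_stable (P : params) (xs hs ns : R) : Prop :=
  forall eps, 0 < eps -> exists delta, 0 < delta /\
    forall (T : R) (x h n : R -> R), sol_on P T x h n ->
      dist3 (x 0) (h 0) (n 0) xs hs ns < delta ->
      forall t, 0 <= t < T -> dist3 (x t) (h t) (n t) xs hs ns < eps.

Definition loc_attractive (P : params) (xs hs ns : R) : Prop :=
  exists delta, 0 < delta /\
    forall x0 h0 n0, dist3 x0 h0 n0 xs hs ns < delta ->
      (exists x h n : R -> R, sol_global P x h n /\
          x 0 = x0 /\ h 0 = h0 /\ n 0 = n0) /\
      (forall x h n : R -> R, sol_global P x h n ->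
          x 0 = x0 -> h 0 = h0 -> n 0 = n0 ->
          is_lim x p_infty xs /\ is_lim h p_infty hs /\ is_lim n p_infty ns).

Definition loc_asymp_stable (P : params) (xs hs ns : R) : Prop :=
  lyap_stable P xs hs ns /\ loc_attractive P xs hs ns.

Definition unstable (P : params) (xs hs ns : R) : Prop :=
  ~ lyap_stable P xs hs ns.

(* Near E0 = (xs, 1, 0) the system is a cascade: n' = n (r (1 - n) - D(h, x)) has a
   growth rate close to r - D(1, xs); h relaxes to 1 at a rate about gamma0 and is driven
   only by n; x relaxes to xs at the rate -((1 - 2 xs) S(1) - mu0 - nu) > 0 and is driven
   only by h. If R0 < 1 the rate of n is negative, and the energy
   (x - xs)^2 + B (h - 1)^2 + A n^2, with weights B, A absorbing the couplings, decays
   exponentially near E0. If R0 > 1, n grows at least like n(0) e^(k t) as long as the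
   solution stays near E0, so solutions starting arbitrarily close to E0 leave a fixed
   neighbourhood. Solutions defined for all times come from Picard iteration for the vector
   field composed with the retraction onto a small cube around E0, which is globally
   Lipschitz and agrees with the model on the cube. *)

From Stdlib Require Import Reals Lra Lia Psatz Classical.
From Coquelicot Require Import Coquelicot.
Open Scope R_scope.

Lemma exp_le_mono a b : a <= b -> exp a <= exp b.
Proof. intros [H|H]; [left; apply exp_increasing; auto | subst; lra]. Qed.

Lemma continuous_of_lipschitz (f : R -> R) (K x : R) : 0 <= K ->
  (forall t, Rabs (f t - f x) <= K * Rabs (t - x)) -> continuous f x.
Proof.
  intros HK Hf. apply continuity_pt_filterlim.
  intros eps Heps. exists (eps / (K + 1)). split.
  - apply Rdiv_lt_0_compat; lra.
  - intros t [_ Ht]. simpl in Ht. unfold R_dist in *.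
    apply Rle_lt_trans with ((K + 1) * Rabs (t - x)).
    + eapply Rle_trans; [apply Hf|]. apply Rmult_le_compat_r; [apply Rabs_pos | lra].
    + apply Rmult_lt_reg_l with (/ (K + 1)); [apply Rinv_0_lt_compat; lra|].
      rewrite <- Rmult_assoc, Rinv_l by lra. lra.
Qed.

Lemma ex_RInt_of_continuous (g : R -> R) a b :
  (forall s, continuous g s) -> ex_RInt g a b.
Proof. intros Hg. apply (@ex_RInt_continuous R_CompleteNormedModule). intros; apply Hg. Qed.

Lemma RInt_swap_opp (g : R -> R) a b : ex_RInt g a b -> RInt g a b = - RInt g b a.
Proof.
  intros Hg. rewrite <- (opp_RInt_swap g a b Hg). unfold opp; simpl. now rewrite Ropp_involutive.
Qed.

Lemma RInt_sub_lower (g : R -> R) a b : (forall s, continuous g s) ->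
  RInt g 0 a - RInt g 0 b = RInt g b a.
Proof.
  intros Hg. rewrite <- (RInt_Chasles g b 0 a) by (apply ex_RInt_of_continuous; auto).
  rewrite (RInt_swap_opp g b 0) by (apply ex_RInt_of_continuous; auto).
  change (plus (- RInt g 0 b) (RInt g 0 a)) with (- RInt g 0 b + RInt g 0 a). ring.
Qed.

Lemma RInt_minus_continuous (f g : R -> R) a b :
  (forall s, continuous f s) -> (forall s, continuous g s) ->
  RInt f a b - RInt g a b = RInt (fun s => f s - g s) a b.
Proof.
  intros Hf Hg. symmetry.
  exact (RInt_minus f g a b (ex_RInt_of_continuous f a b Hf) (ex_RInt_of_continuous g a b Hg)).
Qed.

Lemma abs_RInt_le_const_abs (g : R -> R) a b B : ex_RInt g a b ->
  (forall s, Rmin a b <= s <= Rmax a b -> Rabs (g s) <= B) ->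
  Rabs (RInt g a b) <= B * Rabs (b - a).
Proof.
  intros Hg Hb. destruct (Rle_dec a b) as [Hab|Hab].
  - rewrite (Rabs_pos_eq (b - a)), Rmult_comm by lra. apply abs_RInt_le_const; auto.
    intros t Ht; apply Hb; rewrite Rmin_left, Rmax_right; lra.
  - rewrite RInt_swap_opp, Rabs_Ropp, (Rabs_left (b - a)) by (auto || lra).
    replace (- (b - a)) with (a - b) by ring. rewrite Rmult_comm.
    apply abs_RInt_le_const; [lra | apply ex_RInt_swap; auto |].
    intros t Ht; apply Hb; rewrite Rmin_right, Rmax_left; lra.
Qed.

Lemma abs_RInt_le_exp (g : R -> R) t B K : 0 < K -> ex_RInt g 0 t ->
  (forall s, Rmin 0 t <= s <= Rmax 0 t -> Rabs (g s) <= B * exp (K * Rabs s)) ->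
  Rabs (RInt g 0 t) <= B * (exp (K * Rabs t) - 1) / K.
Proof.
  intros HK Hg Hb. destruct (Rle_dec 0 t) as [Ht|Ht].
  - assert (Hi : is_RInt (fun s => B * exp (K * s)) 0 t (B * (exp (K * t) - 1) / K)).
    { replace (B * (exp (K * t) - 1) / K) with
        (minus ((fun s => B * exp (K * s) / K) t) ((fun s => B * exp (K * s) / K) 0)).
      2:{ unfold minus, plus, opp; simpl. rewrite Rmult_0_r, exp_0. field. lra. }
      apply (is_RInt_derive (fun s => B * exp (K * s) / K)).
      - intros x _. auto_derive; auto. field. lra.
      - intros x _. apply (@ex_derive_continuous R_AbsRing R_NormedModule). auto_derive. auto. }
    eapply Rle_trans; [apply abs_RInt_le; auto|].
    rewrite Rabs_pos_eq, <- (is_RInt_unique _ _ _ _ Hi) by lra.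
    apply RInt_le; auto; [apply ex_RInt_norm; auto | eexists; eauto |].
    intros x Hx. specialize (Hb x). rewrite Rmin_left, Rmax_right, (Rabs_pos_eq x) in Hb by lra.
    apply Hb; lra.
  - assert (Hi : is_RInt (fun s => B * exp (- K * s)) t 0 (B * (exp (K * - t) - 1) / K)).
    { replace (B * (exp (K * - t) - 1) / K) with
        (minus ((fun s => - B * exp (- K * s) / K) 0) ((fun s => - B * exp (- K * s) / K) t)).
      2:{ unfold minus, plus, opp; simpl. rewrite Rmult_0_r, exp_0.
          replace (-K * t) with (K * - t) by ring. field. lra. }
      apply (is_RInt_derive (fun s => - B * exp (- K * s) / K)).
      - intros x _. auto_derive; auto. field. lra.
      - intros x _. apply (@ex_derive_continuous R_AbsRing R_NormedModule). auto_derive. auto. }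
    rewrite RInt_swap_opp, Rabs_Ropp by auto.
    eapply Rle_trans; [apply abs_RInt_le; [lra | apply ex_RInt_swap; auto]|].
    rewrite Rabs_left, <- (is_RInt_unique _ _ _ _ Hi) by lra.
    apply RInt_le; [lra | apply ex_RInt_norm, ex_RInt_swap; auto | eexists; eauto |].
    intros x Hx. specialize (Hb x). rewrite Rmin_right, Rmax_left, (Rabs_left x) in Hb by lra.
    replace (-K * x) with (K * - x) by ring. apply Hb; lra.
Qed.

(** * Global solutions by Picard iteration *)

Lemma is_lim_seq_of_geometric_close (u : nat -> R) v D :
  (forall k, Rabs (u k - v) <= D * (/2)^k) -> is_lim_seq u v.
Proof.
  intros Hclose.
  assert (Hgeom : is_lim_seq (fun k => D * (/2)^k) 0).
  { replace (Finite 0) with (Finite (D * 0)) by (f_equal; ring).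
    apply is_lim_seq_mult'; [apply is_lim_seq_const | apply is_lim_seq_geom].
    rewrite Rabs_pos_eq; lra. }
  apply is_lim_seq_le_le with (u := fun k => v - D * (/2)^k) (w := fun k => v + D * (/2)^k).
  - intros k. specialize (Hclose k). apply Rabs_le_between' in Hclose. lra.
  - replace (Finite v) with (Finite (v - 0)) by (f_equal; ring).
    apply is_lim_seq_minus'; [apply is_lim_seq_const | auto].
  - replace (Finite v) with (Finite (v + 0)) by (f_equal; ring).
    apply is_lim_seq_plus'; [apply is_lim_seq_const | auto].
Qed.

Lemma Rabs_le_of_between_0 s t : Rmin 0 t <= s <= Rmax 0 t -> Rabs s <= Rabs t.
Proof.
  unfold Rmin, Rmax. destruct (Rle_dec 0 t); unfold Rabs; destruct (Rcase_abs s);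
    destruct (Rcase_abs t); lra.
Qed.

(* [S] denotes the model's sensitivity function, hence [Datatypes.S] for the successor. *)
Lemma geometric_increments_tail (u : nat -> R) c : 0 <= c ->
  (forall k, Rabs (u (Datatypes.S k) - u k) <= c * (/2)^k) ->
  forall k j, Rabs (u (j + k)%nat - u k) <= 2 * c * (/2)^k.
Proof.
  intros Hc Hu k j.
  enough (Rabs (u (j + k)%nat - u k) <= 2 * c * ((/2)^k - (/2)^(j + k)))
    by (assert (0 <= (/2)^(j + k)) by (apply pow_le; lra); nra).
  induction j as [|j IH].
  - simpl. rewrite Rminus_diag, Rabs_R0. lra.
  - replace (Datatypes.S j + k)%nat with (Datatypes.S (j + k)) by lia.
    replace (u (Datatypes.S (j + k)) - u k)
      with ((u (Datatypes.S (j + k)) - u (j + k)%nat) + (u (j + k)%nat - u k)) by ring.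
    eapply Rle_trans; [apply Rabs_triang|].
    specialize (Hu (j + k)%nat). simpl (_ ^ Datatypes.S _). lra.
Qed.

Lemma is_lim_seq_geometric_increments (u : nat -> R) c : 0 <= c ->
  (forall k, Rabs (u (Datatypes.S k) - u k) <= c * (/2)^k) ->
  exists l : R, is_lim_seq u l /\ forall k, Rabs (l - u k) <= 2 * c * (/2)^k.
Proof.
  intros Hc Hu. assert (Htail := geometric_increments_tail u c Hc Hu).
  assert (Hcauchy : ex_finite_lim_seq u).
  { apply ex_lim_seq_cauchy_corr. intros eps.
    destruct (pow_lt_1_zero (/2)) with (y := eps / (4 * c + 1)) as [N HN].
    { rewrite Rabs_pos_eq; lra. }
    { apply Rdiv_lt_0_compat; [destruct eps; simpl; lra | lra]. }
    exists N. intros n m Hn Hm.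
    specialize (HN N (le_n N)). rewrite Rabs_pos_eq in HN by (apply pow_le; lra).
    assert (H1 := Htail N (n - N)%nat). assert (H2 := Htail N (m - N)%nat).
    replace (n - N + N)%nat with n in H1 by lia. replace (m - N + N)%nat with m in H2 by lia.
    assert (0 <= (/2)^N) by (apply pow_le; lra).
    assert ((4 * c + 1) * (/2)^N < eps).
    { apply Rmult_lt_reg_l with (/ (4 * c + 1)); [apply Rinv_0_lt_compat; lra|].
      rewrite <- Rmult_assoc, Rinv_l by lra. unfold Rdiv in HN. lra. }
    replace (u n - u m) with ((u n - u N) - (u m - u N)) by ring.
    eapply Rle_lt_trans; [apply Rabs_triang|]. rewrite Rabs_Ropp. nra. }
  destruct Hcauchy as [l Hl]. exists l. split; auto.
  intros k. apply (is_lim_seq_incr_n _ k) in Hl.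
  assert (Hup : Rbar_le l (u k + 2 * c * (/2)^k)).
  { apply (is_lim_seq_le (fun n => u (n + k)%nat) (fun _ => u k + 2 * c * (/2)^k));
      [| auto | apply is_lim_seq_const].
    intros n. specialize (Htail k n). apply Rabs_le_between' in Htail. lra. }
  assert (Hlow : Rbar_le (u k - 2 * c * (/2)^k) l).
  { apply (is_lim_seq_le (fun _ => u k - 2 * c * (/2)^k) (fun n => u (n + k)%nat));
      [| apply is_lim_seq_const | auto].
    intros n. specialize (Htail k n). apply Rabs_le_between' in Htail. lra. }
  simpl in Hup, Hlow. apply Rabs_le_between'. lra.
Qed.

Section Picard.

Variable I : Type.
Variable F : (I -> R) -> I -> R.
Variables M L : R.
Hypothesis M_ge0 : 0 <= M.
Hypothesis L_gt0 : 0 < L.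
Hypothesis F_bounded : forall u i, Rabs (F u i) <= M.
Hypothesis F_lipschitz : forall u v d,
  (forall j, Rabs (u j - v j) <= d) -> forall i, Rabs (F u i - F v i) <= L * d.

Fixpoint picard (y : I -> R) (k : nat) (t : R) (i : I) : R :=
  match k with
  | O => y i
  | Datatypes.S k => y i + RInt (fun s => F (picard y k s) i) 0 t
  end.

Lemma continuous_field_along (u : R -> I -> R) K i s : 0 <= K ->
  (forall j t t', Rabs (u t j - u t' j) <= K * Rabs (t - t')) ->
  continuous (fun s => F (u s) i) s.
Proof.
  intros HK Hu. apply continuous_of_lipschitz with (L * K); [nra|].
  intros t. rewrite Rmult_assoc. apply F_lipschitz. intros j. apply Hu.
Qed.

Lemma picard_lipschitz y k i t t' :
  Rabs (picard y k t i - picard y k t' i) <= M * Rabs (t - t').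
Proof.
  revert i t t'. induction k as [|k IH]; intros i t t'; simpl.
  - replace (y i - y i) with 0 by ring. rewrite Rabs_R0.
    apply Rmult_le_pos; [lra | apply Rabs_pos].
  - assert (Hc : forall s, continuous (fun s => F (picard y k s) i) s).
    { intros s. apply continuous_field_along with M; auto. }
    rewrite Rminus_plus_l_l, RInt_sub_lower by auto.
    eapply Rle_trans; [apply abs_RInt_le_const_abs; [apply ex_RInt_of_continuous; auto|]|].
    + intros s _; apply F_bounded.
    + right; ring.
Qed.

Lemma continuous_field_picard y k i s : continuous (fun s => F (picard y k s) i) s.
Proof. apply continuous_field_along with M; auto. intros; apply picard_lipschitz. Qed.

(* The weight [exp (2 L |t|)] makes each integration gain a factor [1/2]. *)
Lemma picard_increment y k t i :
  Rabs (picard y (Datatypes.S k) t i - picard y k t i)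
    <= M / (2 * L) * (/2)^k * exp (2 * L * Rabs t).
Proof.
  set (c := M / (2 * L)).
  assert (Hc : 0 <= c) by (unfold c; apply Rmult_le_pos; [lra | left; apply Rinv_0_lt_compat; lra]).
  revert t i. induction k as [|k IH]; intros t i.
  - simpl. rewrite Rplus_minus_l.
    eapply Rle_trans.
    { apply abs_RInt_le_const_abs with (B := M); [apply ex_RInt_of_continuous|].
      - intros; apply continuous_const.
      - intros; apply F_bounded. }
    replace (t - 0) with t by ring.
    assert (Hexp := exp_ineq1_le (2 * L * Rabs t)). assert (Ht := Rabs_pos t).
    replace (c * 1 * exp (2 * L * Rabs t)) with (M * (exp (2 * L * Rabs t) / (2 * L)))
      by (unfold c; field; lra).
    apply Rmult_le_compat_l; auto.
    apply Rmult_le_reg_r with (2 * L); [lra|].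
    unfold Rdiv. rewrite Rmult_assoc, Rinv_l by lra. nra.
  - change (picard y (Datatypes.S (Datatypes.S k)) t i) with
      (y i + RInt (fun s => F (picard y (Datatypes.S k) s) i) 0 t).
    change (picard y (Datatypes.S k) t i) with (y i + RInt (fun s => F (picard y k s) i) 0 t).
    rewrite Rminus_plus_l_l, RInt_minus_continuous by (intros; apply continuous_field_picard).
    eapply Rle_trans.
    { apply abs_RInt_le_exp with (B := L * (c * (/2)^k)) (K := 2 * L).
      - lra.
      - apply ex_RInt_of_continuous. intros s.
        apply (@continuous_minus R_UniformSpace R_AbsRing R_NormedModule);
          apply continuous_field_picard.
      - intros s _. rewrite Rmult_assoc. apply F_lipschitz. intros j. apply IH. }
    assert (0 <= c * (/2)^(Datatypes.S k)) by (apply Rmult_le_pos; auto; apply pow_le; lra).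
    replace (L * (c * (/ 2) ^ k) * (exp (2 * L * Rabs t) - 1) / (2 * L))
      with (c * (/2)^(Datatypes.S k) * exp (2 * L * Rabs t) - c * (/2)^(Datatypes.S k))
      by (simpl; field; lra).
    lra.
Qed.

Definition picard_limit (y : I -> R) (t : R) (i : I) : R :=
  real (Lim_seq (fun k => picard y k t i)).

Lemma picard_limit_spec y t i :
  is_lim_seq (fun k => picard y k t i) (picard_limit y t i) /\
  forall k, Rabs (picard_limit y t i - picard y k t i)
              <= 2 * (M / (2 * L) * exp (2 * L * Rabs t)) * (/2)^k.
Proof.
  destruct (is_lim_seq_geometric_increments (fun k => picard y k t i)
              (M / (2 * L) * exp (2 * L * Rabs t))) as [l [Hl Hb]].
  - apply Rmult_le_pos; [apply Rmult_le_pos; [lra | left; apply Rinv_0_lt_compat; lra]|].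
    left; apply exp_pos.
  - intros k. eapply Rle_trans; [apply picard_increment | right; ring].
  - unfold picard_limit. rewrite (is_lim_seq_unique _ _ Hl). auto.
Qed.

Lemma picard_limit_lipschitz y i t t' :
  Rabs (picard_limit y t i - picard_limit y t' i) <= M * Rabs (t - t').
Proof.
  assert (Hlim := is_lim_seq_minus' _ _ _ _
                    (proj1 (picard_limit_spec y t i)) (proj1 (picard_limit_spec y t' i))).
  assert (Hb : forall k, Rabs (picard y k t i - picard y k t' i) <= M * Rabs (t - t'))
    by (intros; apply picard_lipschitz).
  apply Rabs_le_between. split.
  - assert (H : Rbar_le (- (M * Rabs (t - t'))) (picard_limit y t i - picard_limit y t' i));
      [|exact H].
    apply (is_lim_seq_le (fun _ => - (M * Rabs (t - t')))
                         (fun k => picard y k t i - picard y k t' i));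
      [| apply is_lim_seq_const | exact Hlim].
    intros k. specialize (Hb k). apply Rabs_le_between in Hb. lra.
  - assert (H : Rbar_le (picard_limit y t i - picard_limit y t' i) (M * Rabs (t - t')));
      [|exact H].
    apply (is_lim_seq_le (fun k => picard y k t i - picard y k t' i)
                         (fun _ => M * Rabs (t - t')));
      [| exact Hlim | apply is_lim_seq_const].
    intros k. specialize (Hb k). apply Rabs_le_between in Hb. lra.
Qed.

Lemma continuous_field_picard_limit y i s : continuous (fun s => F (picard_limit y s) i) s.
Proof. apply continuous_field_along with M; auto. intros; apply picard_limit_lipschitz. Qed.

Lemma picard_limit_close y t k s j : Rabs s <= Rabs t ->
  Rabs (picard y k s j - picard_limit y s j) <= 2 * (M / (2 * L) * exp (2 * L * Rabs t)) * (/2)^k.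
Proof.
  intros Hst. rewrite Rabs_minus_sym.
  eapply Rle_trans; [apply (proj2 (picard_limit_spec y s j))|].
  apply Rmult_le_compat_r; [apply pow_le; lra|].
  apply Rmult_le_compat_l; [lra|].
  apply Rmult_le_compat_l; [apply Rmult_le_pos; [lra | left; apply Rinv_0_lt_compat; lra]|].
  apply exp_le_mono, Rmult_le_compat_l; lra.
Qed.

(* Passing to the limit in [picard y (S k) = y + int_0^t F (picard y k)]: the integrands
   converge uniformly on [0, t] by [picard_limit_close]. *)
Lemma picard_limit_integral_eq y t i :
  picard_limit y t i = y i + RInt (fun s => F (picard_limit y s) i) 0 t.
Proof.
  set (c := 2 * (M / (2 * L) * exp (2 * L * Rabs t))).
  set (v := y i + RInt (fun s => F (picard_limit y s) i) 0 t).
  assert (Hv : is_lim_seq (fun k => picard y (Datatypes.S k) t i) v).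
  { apply (is_lim_seq_of_geometric_close _ _ (L * c * Rabs t)). intros k. unfold v; simpl.
    rewrite Rminus_plus_l_l, RInt_minus_continuous
      by (intros; apply continuous_field_picard || apply continuous_field_picard_limit).
    eapply Rle_trans.
    { apply abs_RInt_le_const_abs with (B := L * (c * (/2)^k)).
      - apply ex_RInt_of_continuous. intros s.
        apply (@continuous_minus R_UniformSpace R_AbsRing R_NormedModule);
          [apply continuous_field_picard | apply continuous_field_picard_limit].
      - intros s Hs. apply F_lipschitz. intros j. apply picard_limit_close.
        apply Rabs_le_of_between_0; auto. }
    right. rewrite Rminus_0_r. ring. }
  assert (Hs := proj1 (picard_limit_spec y t i)). apply is_lim_seq_incr_1 in Hs.
  apply is_lim_seq_unique in Hs. apply is_lim_seq_unique in Hv.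
  rewrite Hs in Hv. now injection Hv.
Qed.

Lemma picard_limit_derive y t i :
  is_derive (fun t => picard_limit y t i) t (F (picard_limit y t) i).
Proof.
  apply is_derive_ext with (f := fun t => y i + RInt (fun s => F (picard_limit y s) i) 0 t).
  { intros u. symmetry. apply picard_limit_integral_eq. }
  replace (F (picard_limit y t) i) with (plus zero (F (picard_limit y t) i))
    by apply plus_zero_l.
  apply (is_derive_plus (fun _ => y i)); [apply (@is_derive_const R_AbsRing R_NormedModule)|].
  apply (is_derive_RInt (fun s => F (picard_limit y s) i)
           (fun b => RInt (fun s => F (picard_limit y s) i) 0 b) 0 t).
  - apply filter_forall. intros b. apply (RInt_correct (V := R_CompleteNormedModule)).
    apply ex_RInt_of_continuous, continuous_field_picard_limit.
  - apply continuous_field_picard_limit.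
Qed.

Theorem picard_global_solution (y : I -> R) :
  exists u : R -> I -> R, (forall i, u 0 i = y i) /\
    forall t i, is_derive (fun t => u t i) t (F (u t) i).
Proof.
  exists (picard_limit y). split.
  - intros i. rewrite picard_limit_integral_eq, RInt_point. unfold zero; simpl. ring.
  - apply picard_limit_derive.
Qed.

End Picard.

(** * Bounded Lipschitz functions on subsets of R^3 *)

Lemma exp_lipschitz a b : Rabs (exp a - exp b) <= exp (Rmax a b) * Rabs (a - b).
Proof.
  assert (Hle : forall a b, a <= b -> Rabs (exp a - exp b) <= exp (Rmax a b) * Rabs (a - b)).
  { clear a b. intros a b Hab.
    rewrite Rmax_right, Rabs_minus_sym, (Rabs_minus_sym a) by auto.
    assert (exp a <= exp b) by (apply exp_le_mono; auto).
    rewrite !Rabs_pos_eq by lra.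
    assert (H1 := exp_ineq1_le (a - b)). assert (0 < exp b) by apply exp_pos.
    replace (exp a) with (exp b * exp (a - b)) by (rewrite <- exp_plus; f_equal; ring). nra. }
  destruct (Rle_dec a b) as [H|H]; [auto|].
  rewrite Rabs_minus_sym, (Rabs_minus_sym a), Rmax_comm. apply Hle. lra.
Qed.

Lemma ln_le_sub1 x : 0 < x -> ln x <= x - 1.
Proof. intros Hx. assert (H := exp_ineq1_le (ln x)). rewrite exp_ln in H by auto. lra. Qed.

Lemma ln_lipschitz m u v : 0 < m -> m <= u -> m <= v -> Rabs (ln u - ln v) <= Rabs (u - v) / m.
Proof.
  intros Hm.
  assert (Hle : forall u v, m <= u -> u <= v -> Rabs (ln u - ln v) <= Rabs (u - v) / m).
  { clear u v. intros u v Hu Huv. assert (ln u <= ln v) by (apply ln_le; lra).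
    rewrite Rabs_minus_sym, (Rabs_minus_sym u), !Rabs_pos_eq by lra.
    rewrite <- ln_div by lra.
    eapply Rle_trans; [apply ln_le_sub1, Rdiv_lt_0_compat; lra|].
    replace (v / u - 1) with ((v - u) / u) by (field; lra).
    unfold Rdiv. apply Rmult_le_compat_l; [lra | apply Rinv_le_contravar; lra]. }
  intros Hu Hv. destruct (Rle_dec u v) as [H|H]; [auto|].
  rewrite Rabs_minus_sym, (Rabs_minus_sym u). apply Hle; lra.
Qed.

Definition l1_dist3 (a b c a' b' c' : R) : R := Rabs (a - a') + Rabs (b - b') + Rabs (c - c').

Lemma l1_dist3_ge0 a b c a' b' c' : 0 <= l1_dist3 a b c a' b' c'.
Proof.
  unfold l1_dist3. generalize (Rabs_pos (a - a')) (Rabs_pos (b - b')) (Rabs_pos (c - c')). lra.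
Qed.

Definition lip_bounded_on (Dom : R -> R -> R -> Prop) (f : R -> R -> R -> R) : Prop :=
  exists K B, 0 <= K /\ (forall a b c, Dom a b c -> Rabs (f a b c) <= B) /\
    forall a b c a' b' c', Dom a b c -> Dom a' b' c' ->
      Rabs (f a b c - f a' b' c') <= K * l1_dist3 a b c a' b' c'.

Section LipBounded.

Variable Dom : R -> R -> R -> Prop.

Lemma lip_bounded_const k : lip_bounded_on Dom (fun _ _ _ => k).
Proof.
  exists 0, (Rabs k). split; [lra | split; [intros; lra|]].
  intros. rewrite Rminus_diag, Rabs_R0, Rmult_0_l. lra.
Qed.

Lemma lip_bounded_fst B : (forall a b c, Dom a b c -> Rabs a <= B) ->
  lip_bounded_on Dom (fun a _ _ => a).
Proof.
  intros HB. exists 1, B. split; [lra | split; auto]. intros. unfold l1_dist3.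
  generalize (Rabs_pos (b - b')) (Rabs_pos (c - c')). lra.
Qed.

Lemma lip_bounded_snd B : (forall a b c, Dom a b c -> Rabs b <= B) ->
  lip_bounded_on Dom (fun _ b _ => b).
Proof.
  intros HB. exists 1, B. split; [lra | split; auto]. intros. unfold l1_dist3.
  generalize (Rabs_pos (a - a')) (Rabs_pos (c - c')). lra.
Qed.

Lemma lip_bounded_thd B : (forall a b c, Dom a b c -> Rabs c <= B) ->
  lip_bounded_on Dom (fun _ _ c => c).
Proof.
  intros HB. exists 1, B. split; [lra | split; auto]. intros. unfold l1_dist3.
  generalize (Rabs_pos (a - a')) (Rabs_pos (b - b')). lra.
Qed.

Lemma lip_bounded_plus f g : lip_bounded_on Dom f -> lip_bounded_on Dom g ->
  lip_bounded_on Dom (fun a b c => f a b c + g a b c).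
Proof.
  intros [K1 [B1 [HK1 [Hb1 Hl1]]]] [K2 [B2 [HK2 [Hb2 Hl2]]]].
  exists (K1 + K2), (B1 + B2). split; [lra | split].
  - intros a b c H. eapply Rle_trans; [apply Rabs_triang|].
    generalize (Hb1 a b c H) (Hb2 a b c H). lra.
  - intros a b c a' b' c' H H'.
    replace (f a b c + g a b c - (f a' b' c' + g a' b' c'))
      with ((f a b c - f a' b' c') + (g a b c - g a' b' c')) by ring.
    eapply Rle_trans; [apply Rabs_triang|].
    generalize (Hl1 a b c a' b' c' H H') (Hl2 a b c a' b' c' H H'). lra.
Qed.

Lemma lip_bounded_opp f : lip_bounded_on Dom f -> lip_bounded_on Dom (fun a b c => - f a b c).
Proof.
  intros [K [B [HK [Hb Hl]]]]. exists K, B. split; [lra | split].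
  - intros. rewrite Rabs_Ropp. auto.
  - intros. replace (- f a b c - - f a' b' c') with (- (f a b c - f a' b' c')) by ring.
    rewrite Rabs_Ropp. auto.
Qed.

Lemma lip_bounded_minus f g : lip_bounded_on Dom f -> lip_bounded_on Dom g ->
  lip_bounded_on Dom (fun a b c => f a b c - g a b c).
Proof.
  intros. apply (lip_bounded_plus f (fun a b c => - g a b c)); [|apply lip_bounded_opp]; auto.
Qed.

Lemma lip_bounded_mult f g : lip_bounded_on Dom f -> lip_bounded_on Dom g ->
  lip_bounded_on Dom (fun a b c => f a b c * g a b c).
Proof.
  intros [K1 [B1 [HK1 [Hb1 Hl1]]]] [K2 [B2 [HK2 [Hb2 Hl2]]]].
  exists (Rabs B1 * K2 + Rabs B2 * K1), (B1 * B2). split.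
  { generalize (Rabs_pos B1) (Rabs_pos B2). nra. } split.
  - intros a b c H. rewrite Rabs_mult.
    generalize (Hb1 a b c H) (Hb2 a b c H) (Rabs_pos (f a b c)) (Rabs_pos (g a b c)). nra.
  - intros a b c a' b' c' H H'.
    replace (f a b c * g a b c - f a' b' c' * g a' b' c')
      with (f a b c * (g a b c - g a' b' c') + g a' b' c' * (f a b c - f a' b' c')) by ring.
    eapply Rle_trans; [apply Rabs_triang|]. rewrite !Rabs_mult.
    assert (Hf : Rabs (f a b c) <= Rabs B1)
      by (eapply Rle_trans; [apply Hb1; auto | apply Rle_abs]).
    assert (Hg : Rabs (g a' b' c') <= Rabs B2)
      by (eapply Rle_trans; [apply Hb2; auto | apply Rle_abs]).
    rewrite Rmult_plus_distr_r, !Rmult_assoc.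
    apply Rplus_le_compat; apply Rmult_le_compat; auto using Rabs_pos.
Qed.

Lemma lip_bounded_inv f m : 0 < m -> lip_bounded_on Dom f ->
  (forall a b c, Dom a b c -> m <= f a b c) -> lip_bounded_on Dom (fun a b c => / f a b c).
Proof.
  intros Hm [K [B [HK [Hb Hl]]]] Hlow.
  exists (K / (m * m)), (/ m).
  split; [apply Rmult_le_pos; [auto | left; apply Rinv_0_lt_compat; nra]|].
  split.
  - intros a b c H. specialize (Hlow a b c H).
    rewrite Rabs_pos_eq by (left; apply Rinv_0_lt_compat; lra). apply Rinv_le_contravar; lra.
  - intros a b c a' b' c' H H'.
    specialize (Hlow a b c H) as H1. specialize (Hlow a' b' c' H') as H2.
    replace (/ f a b c - / f a' b' c') with ((f a' b' c' - f a b c) / (f a b c * f a' b' c'))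
      by (field; lra).
    unfold Rdiv. rewrite Rabs_mult, Rabs_minus_sym, (Rabs_pos_eq (/ _))
      by (left; apply Rinv_0_lt_compat; nra).
    replace (K * / (m * m) * l1_dist3 a b c a' b' c')
      with (K * l1_dist3 a b c a' b' c' * / (m * m)) by ring.
    apply Rmult_le_compat; auto using Rabs_pos.
    + left; apply Rinv_0_lt_compat; nra.
    + apply Rinv_le_contravar; [nra | apply Rmult_le_compat; lra].
Qed.

Lemma lip_bounded_exp f : lip_bounded_on Dom f -> lip_bounded_on Dom (fun a b c => exp (f a b c)).
Proof.
  intros [K [B [HK [Hb Hl]]]].
  assert (Hup : forall a b c, Dom a b c -> f a b c <= B)
    by (intros a b c H; generalize (Hb a b c H) (Rle_abs (f a b c)); lra).
  exists (exp B * K), (exp B). split; [apply Rmult_le_pos; [left; apply exp_pos | auto]|]. split.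
  - intros a b c H. rewrite Rabs_pos_eq by (left; apply exp_pos). apply exp_le_mono; auto.
  - intros a b c a' b' c' H H'. eapply Rle_trans; [apply exp_lipschitz|].
    rewrite Rmult_assoc. apply Rmult_le_compat; auto using Rabs_pos; [left; apply exp_pos|].
    apply exp_le_mono, Rmax_lub; auto.
Qed.

Lemma lip_bounded_ln f m : 0 < m -> lip_bounded_on Dom f ->
  (forall a b c, Dom a b c -> m <= f a b c) -> lip_bounded_on Dom (fun a b c => ln (f a b c)).
Proof.
  intros Hm [K [B [HK [Hb Hl]]]] Hlow.
  exists (K / m), ((B + m) / m + Rabs (ln m)).
  split; [apply Rmult_le_pos; [auto | left; apply Rinv_0_lt_compat; lra]|]. split.
  - intros a b c H. replace (ln (f a b c)) with ((ln (f a b c) - ln m) + ln m) by ring.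
    eapply Rle_trans; [apply Rabs_triang | apply Rplus_le_compat_r].
    eapply Rle_trans; [apply ln_lipschitz; auto; lra|].
    unfold Rdiv. apply Rmult_le_compat_r; [left; apply Rinv_0_lt_compat; lra|].
    eapply Rle_trans; [apply Rabs_triang|]. rewrite Rabs_Ropp, (Rabs_pos_eq m) by lra.
    generalize (Hb a b c H). lra.
  - intros a b c a' b' c' H H'. eapply Rle_trans; [apply (ln_lipschitz m); auto|].
    replace (K / m * l1_dist3 a b c a' b' c') with (K * l1_dist3 a b c a' b' c' / m)
      by (field; lra).
    unfold Rdiv. apply Rmult_le_compat_r; [left; apply Rinv_0_lt_compat; lra | auto].
Qed.

Lemma lip_bounded_Rpower f e m : 0 < m -> lip_bounded_on Dom f ->
  (forall a b c, Dom a b c -> m <= f a b c) -> lip_bounded_on Dom (fun a b c => Rpower (f a b c) e).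
Proof.
  intros. unfold Rpower. apply (lip_bounded_exp (fun a b c => e * ln (f a b c))).
  apply (lip_bounded_mult (fun _ _ _ => e));
    [apply lip_bounded_const | apply lip_bounded_ln with m; auto].
Qed.

End LipBounded.

Definition cube (e1 e2 e3 rho a b c : R) : Prop :=
  Rabs (a - e1) <= rho /\ Rabs (b - e2) <= rho /\ Rabs (c - e3) <= rho.

Lemma cube_mono e1 e2 e3 rho rho' a b c :
  rho <= rho' -> cube e1 e2 e3 rho a b c -> cube e1 e2 e3 rho' a b c.
Proof. unfold cube. lra. Qed.

Definition clamp (l u z : R) : R := Rmax l (Rmin u z).

Lemma clamp_between l u z : l <= u -> l <= clamp l u z <= u.
Proof. intros. unfold clamp, Rmax, Rmin. repeat destruct Rle_dec; lra. Qed.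

Lemma clamp_id l u z : l <= z <= u -> clamp l u z = z.
Proof. intros. unfold clamp, Rmax, Rmin. repeat destruct Rle_dec; lra. Qed.

Lemma clamp_lipschitz l u z z' : l <= u -> Rabs (clamp l u z - clamp l u z') <= Rabs (z - z').
Proof.
  intros. unfold clamp, Rmax, Rmin.
  repeat destruct Rle_dec; unfold Rabs; repeat destruct Rcase_abs; lra.
Qed.

(* Composing with the retraction of R^3 onto the cube extends [f] from the cube to a
   globally bounded and Lipschitz function. *)
Definition clamp_to_cube (e1 e2 e3 rho : R) (f : R -> R -> R -> R) (a b c : R) : R :=
  f (clamp (e1 - rho) (e1 + rho) a) (clamp (e2 - rho) (e2 + rho) b) (clamp (e3 - rho) (e3 + rho) c).

Lemma clamp_to_cube_id e1 e2 e3 rho f a b c :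
  cube e1 e2 e3 rho a b c -> clamp_to_cube e1 e2 e3 rho f a b c = f a b c.
Proof.
  unfold cube, clamp_to_cube. intros (Ha & Hb & Hc).
  apply Rabs_le_between' in Ha, Hb, Hc. rewrite !clamp_id; auto.
Qed.

Lemma clamp_to_cube_lip_bounded e1 e2 e3 rho f : 0 <= rho ->
  lip_bounded_on (cube e1 e2 e3 rho) f ->
  lip_bounded_on (fun _ _ _ => True) (clamp_to_cube e1 e2 e3 rho f).
Proof.
  intros Hrho [K [B [HK [Hb Hl]]]].
  assert (Hin : forall a b c, cube e1 e2 e3 rho (clamp (e1 - rho) (e1 + rho) a)
                  (clamp (e2 - rho) (e2 + rho) b) (clamp (e3 - rho) (e3 + rho) c)).
  { intros. unfold cube. split; [|split]; apply Rabs_le_between'; apply clamp_between; lra. }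
  exists K, B. split; auto. split.
  - intros. apply Hb, Hin.
  - intros. eapply Rle_trans; [apply Hl; apply Hin|].
    apply Rmult_le_compat_l; auto. unfold l1_dist3.
    generalize (clamp_lipschitz (e1 - rho) (e1 + rho) a a')
      (clamp_lipschitz (e2 - rho) (e2 + rho) b b') (clamp_lipschitz (e3 - rho) (e3 + rho) c c').
    intros H1 H2 H3. specialize (H1 ltac:(lra)). specialize (H2 ltac:(lra)).
    specialize (H3 ltac:(lra)).
    lra.
Qed.

Lemma Rabs_le_center_radius e rho z : Rabs (z - e) <= rho -> Rabs z <= Rabs e + rho.
Proof.
  intros H. replace z with ((z - e) + e) by ring.
  eapply Rle_trans; [apply Rabs_triang | lra].
Qed.

Lemma lip_bounded_cube_fst e1 e2 e3 rho : lip_bounded_on (cube e1 e2 e3 rho) (fun a _ _ => a).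
Proof.
  apply lip_bounded_fst with (Rabs e1 + rho). 
  intros a b c [H _]. now apply Rabs_le_center_radius.
Qed.

Lemma lip_bounded_cube_snd e1 e2 e3 rho : lip_bounded_on (cube e1 e2 e3 rho) (fun _ b _ => b).
Proof.
  apply lip_bounded_snd with (Rabs e2 + rho). 
  intros a b c [_ [H _]]. now apply Rabs_le_center_radius.
Qed.

Lemma lip_bounded_cube_thd e1 e2 e3 rho : lip_bounded_on (cube e1 e2 e3 rho) (fun _ _ c => c).
Proof.
  apply lip_bounded_thd with (Rabs e3 + rho). 
  intros a b c [_ [_ H]]. now apply Rabs_le_center_radius.
Qed.

Inductive axis3 : Type := ax1 | ax2 | ax3.

Lemma global_solution3 (F1 F2 F3 : R -> R -> R -> R) :
  lip_bounded_on (fun _ _ _ => True) F1 -> lip_bounded_on (fun _ _ _ => True) F2 ->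
  lip_bounded_on (fun _ _ _ => True) F3 ->
  forall y1 y2 y3, exists x h n : R -> R, x 0 = y1 /\ h 0 = y2 /\ n 0 = y3 /\
    forall t, is_derive x t (F1 (x t) (h t) (n t)) /\ is_derive h t (F2 (x t) (h t) (n t)) /\
              is_derive n t (F3 (x t) (h t) (n t)).
Proof.
  intros [K1 [B1 [HK1 [Hb1 Hl1]]]] [K2 [B2 [HK2 [Hb2 Hl2]]]] [K3 [B3 [HK3 [Hb3 Hl3]]]] y1 y2 y3.
  set (F := fun (u : axis3 -> R) (i : axis3) =>
         match i with
         | ax1 => F1 (u ax1) (u ax2) (u ax3)
         | ax2 => F2 (u ax1) (u ax2) (u ax3)
         | ax3 => F3 (u ax1) (u ax2) (u ax3)
         end).
  set (y := fun i : axis3 => match i with ax1 => y1 | ax2 => y2 | ax3 => y3 end).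
  set (B := Rabs B1 + Rabs B2 + Rabs B3). set (K := K1 + K2 + K3).
  assert (HB : 0 <= B) by (unfold B; generalize (Rabs_pos B1) (Rabs_pos B2) (Rabs_pos B3); lra).
  destruct (picard_global_solution axis3 F B (3 * K + 1) HB ltac:(unfold K; lra)) with (y := y)
    as [u [Hu0 Hu]].
  - intros u i. unfold B.
    generalize (Rle_abs B1) (Rle_abs B2) (Rle_abs B3) (Rabs_pos B1) (Rabs_pos B2) (Rabs_pos B3).
    destruct i; simpl; [generalize (Hb1 (u ax1) (u ax2) (u ax3) I)
                       | generalize (Hb2 (u ax1) (u ax2) (u ax3) I)
                       | generalize (Hb3 (u ax1) (u ax2) (u ax3) I)]; lra.
  - intros u v d Hd i.
    set (dist := l1_dist3 (u ax1) (u ax2) (u ax3) (v ax1) (v ax2) (v ax3)).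
    assert (Hdist : dist <= 3 * d)
      by (unfold dist, l1_dist3; generalize (Hd ax1) (Hd ax2) (Hd ax3); lra).
    assert (0 <= dist) by apply l1_dist3_ge0.
    assert (Hi : Rabs (F u i - F v i) <= K * dist).
    { unfold K. destruct i; simpl;
        [eapply Rle_trans; [apply Hl1; auto|] | eapply Rle_trans; [apply Hl2; auto|]
        | eapply Rle_trans; [apply Hl3; auto|]]; apply Rmult_le_compat_r; auto; lra. }
    assert (0 <= K) by (unfold K; lra).
    nra.
  - exists (fun t => u t ax1), (fun t => u t ax2), (fun t => u t ax3).
    split; [apply Hu0 | split; [apply Hu0 | split; [apply Hu0 |]]].
    intros t. split; [|split]; [apply (Hu t ax1) | apply (Hu t ax2) | apply (Hu t ax3)].
Qed.

Lemma continuous_of_is_derive (f : R -> R) t df : is_derive f t df -> continuous f t.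
Proof. intros Hf. apply (@ex_derive_continuous R_AbsRing R_NormedModule). eexists; eauto. Qed.

Lemma clamped_global_solution e1 e2 e3 rho (f1 f2 f3 : R -> R -> R -> R) : 0 <= rho ->
  lip_bounded_on (cube e1 e2 e3 rho) f1 -> lip_bounded_on (cube e1 e2 e3 rho) f2 ->
  lip_bounded_on (cube e1 e2 e3 rho) f3 ->
  forall y1 y2 y3, exists x h n : R -> R, x 0 = y1 /\ h 0 = y2 /\ n 0 = y3 /\
    forall t, continuous x t /\ continuous h t /\ continuous n t /\
      (cube e1 e2 e3 rho (x t) (h t) (n t) ->
         is_derive x t (f1 (x t) (h t) (n t)) /\ is_derive h t (f2 (x t) (h t) (n t)) /\
         is_derive n t (f3 (x t) (h t) (n t))).
Proof.
  intros Hrho L1 L2 L3 y1 y2 y3.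
  destruct (global_solution3 (clamp_to_cube e1 e2 e3 rho f1) (clamp_to_cube e1 e2 e3 rho f2)
              (clamp_to_cube e1 e2 e3 rho f3)) with (y1 := y1) (y2 := y2) (y3 := y3)
    as [x [h [n [E1 [E2 [E3 Hx]]]]]]; try (apply clamp_to_cube_lip_bounded; auto).
  exists x, h, n. split; [auto | split; [auto | split; [auto |]]]. intros t.
  destruct (Hx t) as (Dx & Dh & Dn).
  split; [|split; [|split]]; try (eapply continuous_of_is_derive; eauto).
  intros Hin. rewrite !clamp_to_cube_id in Dx, Dh, Dn by auto. auto.
Qed.

(** * Differential inequalities *)

Lemma continuous_eps_delta (g : R -> R) s e : continuous g s -> 0 < e ->
  exists d, 0 < d /\ forall t, Rabs (t - s) < d -> Rabs (g t - g s) < e.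
Proof.
  intros Hc He. apply continuity_pt_filterlim in Hc.
  destruct (Hc e He) as [d [Hd H]]. exists d. split; auto.
  intros t Ht. destruct (Req_dec t s) as [->|E].
  - rewrite Rminus_diag, Rabs_R0; auto.
  - apply H. split; [split; [exact I | intro Es; apply E; auto] | apply Ht].
Qed.

Lemma le_of_continuous_left (g : R -> R) s K : 0 < s -> continuous g s ->
  (forall t, 0 <= t < s -> g t <= K) -> g s <= K.
Proof.
  intros Hs Hc H. destruct (Rle_dec (g s) K) as [|Hn]; auto. exfalso.
  destruct (continuous_eps_delta g s (g s - K)) as [d [Hd Hdd]]; auto; [lra|].
  set (t := Rmax 0 (s - d / 2)).
  assert (Ht : 0 <= t < s) by (unfold t, Rmax; destruct Rle_dec; lra).
  assert (Hts : Rabs (t - s) < d) by (unfold t, Rmax; destruct Rle_dec; rewrite Rabs_left; lra).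
  specialize (Hdd t Hts). specialize (H t Ht). apply Rabs_lt_between' in Hdd. lra.
Qed.

(* Argue at the supremum of the times up to which the bound holds. *)
Lemma continuous_induction (g : R -> R) (T th : R) :
  (forall t, 0 <= t < T -> continuous g t) -> g 0 < th ->
  (forall s, 0 < s < T -> (forall t, 0 <= t < s -> g t < th) -> g s < th) ->
  forall t, 0 <= t < T -> g t < th.
Proof.
  intros Hc H0 Hs t0 Ht0. destruct (Rlt_dec (g t0) th) as [|Hn]; auto. exfalso.
  set (E := fun s => 0 <= s <= t0 /\ forall t, 0 <= t <= s -> g t < th).
  assert (E0 : E 0) by (split; [lra | intros t Ht; replace t with 0 by lra; auto]).
  destruct (completeness E) as [sg [Hub Hlub]].
  { exists t0. intros s [Hs' _]. lra. }
  { exists 0. auto. }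
  assert (Hsg0 : 0 <= sg) by (apply Hub; auto).
  assert (Hsgt : sg <= t0) by (apply Hlub; intros s [Hs' _]; lra).
  assert (Hbefore : forall t, 0 <= t < sg -> g t < th).
  { intros t Ht.
    destruct (classic (exists s, E s /\ t < s)) as [[s [[_ Hs2] Hts]]|Hne]; [apply Hs2; lra|].
    exfalso. assert (Hu : is_upper_bound E t).
    { intros s Es. destruct (Rle_dec s t); auto. exfalso; apply Hne; exists s; split; auto; lra. }
    specialize (Hlub t Hu). lra. }
  assert (Hat : g sg < th) by (destruct (Req_dec sg 0) as [->|]; [auto | apply Hs; [lra | auto]]).
  assert (Hlt : sg < t0) by (destruct (Req_dec sg t0) as [->|]; lra).
  destruct (continuous_eps_delta g sg (th - g sg)) as [d [Hd Hdd]]; [apply Hc; lra | lra|].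
  set (s' := Rmin (sg + d / 2) t0).
  assert (Es' : E s').
  { split; [unfold s', Rmin; destruct Rle_dec; lra|].
    intros t Ht. destruct (Rlt_dec t sg); [apply Hbefore; lra|].
    destruct (Req_dec t sg) as [->|]; auto.
    assert (Rabs (t - sg) < d)
      by (unfold s', Rmin in Ht; destruct Rle_dec in Ht; rewrite Rabs_pos_eq; lra).
    specialize (Hdd t H1). apply Rabs_lt_between' in Hdd. lra. }
  specialize (Hub s' Es'). unfold s', Rmin in Hub; destruct Rle_dec in Hub; lra.
Qed.

Lemma Rle_of_derive_nonpos (f : R -> R) a b : a <= b ->
  (forall t, a <= t <= b -> exists df, is_derive f t df /\ df <= 0) -> f b <= f a.
Proof.
  intros Hab Hd.
  assert (Hder : forall t, a <= t <= b -> is_derive f t (Derive f t) /\ Derive f t <= 0).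
  { intros t Ht. destruct (Hd t Ht) as [df [Hf Hdf]]. rewrite (is_derive_unique _ _ _ Hf). auto. }
  destruct (MVT_gen f a b (Derive f)) as [c0 [Hc0 Heq]];
    rewrite ?Rmin_left, ?Rmax_right in * by lra.
  - intros t Ht. apply Hder. lra.
  - intros t Ht. apply continuity_pt_filterlim.
    destruct (Hder t Ht) as [Hf _]. eapply continuous_of_is_derive; eauto.
  - destruct (Hder c0 Hc0) as [_ H]. nra.
Qed.

(* Gronwall for [W' <= - c W]: the product [W t * exp (c t)] is nonincreasing. *)
Lemma le_exp_of_derive_le (W : R -> R) c s : 0 <= s ->
  (forall t, 0 <= t <= s -> exists dW, is_derive W t dW /\ dW <= - c * W t) ->
  W s <= W 0 * exp (- c * s).
Proof.
  intros Hs Hd.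
  assert (Hmono : W s * exp (c * s) <= W 0 * exp (c * 0)).
  { apply (Rle_of_derive_nonpos (fun t => W t * exp (c * t))); auto.
    intros t Ht. destruct (Hd t Ht) as [dW [HW HdW]].
    exists (exp (c * t) * (dW + c * W t)). split.
    - auto_derive; [eexists; eauto|].
      replace (Derive (fun x => W x) t) with dW by (symmetry; apply is_derive_unique; auto). ring.
    - assert (0 < exp (c * t)) by apply exp_pos. nra. }
  rewrite Rmult_0_r, exp_0, Rmult_1_r in Hmono.
  replace (W s) with (W s * exp (c * s) * exp (- c * s))
    by (rewrite Rmult_assoc, <- exp_plus; replace (c * s + - c * s) with 0 by ring;
        rewrite exp_0; ring).
  apply Rmult_le_compat_r; [left; apply exp_pos | auto].
Qed.

(** * Lyapunov decay for cascades *)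

Lemma young_ineq a b k : 0 < k -> a * b <= k / 2 * a^2 + 1 / (2 * k) * b^2.
Proof.
  intros Hk. assert (0 <= k / 2 * (a - b / k)^2) by (apply Rmult_le_pos; [lra | apply pow2_ge_0]).
  replace (k / 2 * a^2 + 1 / (2 * k) * b^2) with (k / 2 * (a - b / k)^2 + a * b) by (field; lra).
  lra.
Qed.

(* For a cascade [u <- v <- w] (u is driven by v, v by w, w is autonomous), the
   weights [B] and [A] absorb the cross terms by Young's inequality. *)
Lemma cascade_energy_dissipation u v w du dv dw a0 g k K1 K2 B A :
  0 < a0 -> 0 < g -> 0 < k -> 0 <= K1 -> 0 <= K2 -> 1 <= B -> 1 <= A ->
  K1^2 / (2 * a0) <= B * g / 4 -> B * K2^2 / (2 * g) <= A * k / 2 ->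
  u * du <= - a0 * u^2 + K1 * (Rabs u * Rabs v) ->
  v * dv <= K2 * (Rabs w * Rabs v) - g * v^2 ->
  w * dw <= - k * w^2 ->
  2 * (u * du + B * (v * dv) + A * (w * dw))
    <= - Rmin a0 (Rmin (g / 2) k) * (u^2 + B * v^2 + A * w^2).
Proof.
  intros Ha Hg Hk HK1 HK2 HB HA HBw HAw Hu Hv Hw.
  set (cc := Rmin a0 (Rmin (g / 2) k)).
  assert (Hc1 : cc <= a0) by apply Rmin_l.
  assert (Hc2 : cc <= g / 2) by (eapply Rle_trans; [apply Rmin_r | apply Rmin_l]).
  assert (Hc3 : cc <= k) by (eapply Rle_trans; [apply Rmin_r | apply Rmin_r]).
  assert (Hc0 : 0 < cc) by (unfold cc; repeat apply Rmin_glb_lt; lra).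
  rewrite <- (pow2_abs u), <- (pow2_abs v), <- (pow2_abs w) in *.
  set (U := Rabs u) in *. set (V := Rabs v) in *. set (Wn := Rabs w) in *.
  assert (Y1 : K1 * (U * V) <= a0 / 2 * U^2 + K1^2 / (2 * a0) * V^2).
  { assert (H := young_ineq U (K1 * V) a0 Ha).
    replace (K1^2 / (2 * a0) * V^2) with (1 / (2 * a0) * (K1 * V)^2) by (field; lra). nra. }
  assert (Y2 : K2 * (Wn * V) <= g / 2 * V^2 + K2^2 / (2 * g) * Wn^2).
  { assert (H := young_ineq V (K2 * Wn) g Hg).
    replace (K2^2 / (2 * g) * Wn^2) with (1 / (2 * g) * (K2 * Wn)^2) by (field; lra). nra. }
  assert (P1 : 0 <= U^2) by apply pow2_ge_0.
  assert (P2 : 0 <= V^2) by apply pow2_ge_0.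
  assert (P3 : 0 <= Wn^2) by apply pow2_ge_0.
  assert (F1 : K1^2 / (2 * a0) * V^2 <= B * g / 4 * V^2) by (apply Rmult_le_compat_r; auto).
  assert (F2 : B * (K2^2 / (2 * g) * Wn^2) <= A * k / 2 * Wn^2)
    by (replace (B * (K2^2 / (2 * g) * Wn^2)) with (B * K2^2 / (2 * g) * Wn^2) by (field; lra);
        apply Rmult_le_compat_r; auto).
  assert (G1 : cc * U^2 <= a0 * U^2) by (apply Rmult_le_compat_r; auto).
  assert (G2 : cc * (B * V^2) <= g / 2 * (B * V^2)) by (apply Rmult_le_compat_r; nra).
  assert (G3 : cc * (A * Wn^2) <= k * (A * Wn^2)) by (apply Rmult_le_compat_r; nra).
  assert (Hv' : B * (v * dv) <= B * (g / 2 * V^2 + K2^2 / (2 * g) * Wn^2 - g * V^2))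
    by (apply Rmult_le_compat_l; lra).
  assert (Hw' : A * (w * dw) <= A * (- k * Wn^2)) by (apply Rmult_le_compat_l; lra).
  lra.
Qed.

Definition sqdist3 (e1 e2 e3 a b c : R) : R := (a - e1)^2 + (b - e2)^2 + (c - e3)^2.

Lemma sqdist3_ge0 e1 e2 e3 a b c : 0 <= sqdist3 e1 e2 e3 a b c.
Proof.
  unfold sqdist3. generalize (pow2_ge_0 (a - e1)) (pow2_ge_0 (b - e2)) (pow2_ge_0 (c - e3)). lra.
Qed.

Lemma continuous_weighted_sq (f : R -> R) w e t :
  continuous f t -> continuous (fun t => w * (f t - e)^2) t.
Proof.
  intros Hf. apply (continuous_comp f (fun z => w * (z - e)^2)); auto.
  apply (@ex_derive_continuous R_AbsRing R_NormedModule). auto_derive. auto.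
Qed.

Lemma continuous_weighted_sqdist3 wa wb wc e1 e2 e3 (x h n : R -> R) t :
  continuous x t -> continuous h t -> continuous n t ->
  continuous (fun t => wa * (x t - e1)^2 + wb * (h t - e2)^2 + wc * (n t - e3)^2) t.
Proof.
  intros Hx Hh Hn.
  repeat apply (@continuous_plus R_UniformSpace R_AbsRing R_NormedModule);
    apply continuous_weighted_sq; auto.
Qed.

Lemma continuous_sqdist3 e1 e2 e3 (x h n : R -> R) t :
  continuous x t -> continuous h t -> continuous n t ->
  continuous (fun t => sqdist3 e1 e2 e3 (x t) (h t) (n t)) t.
Proof.
  intros Hx Hh Hn.
  apply (continuous_ext (fun t => 1 * (x t - e1)^2 + 1 * (h t - e2)^2 + 1 * (n t - e3)^2)).
  - intros s. unfold sqdist3. now rewrite !Rmult_1_l.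
  - apply continuous_weighted_sqdist3; auto.
Qed.

Definition exp_decay_in_ball (F1 F2 F3 : R -> R -> R -> R) (e1 e2 e3 rho cc C : R) : Prop :=
  forall T (x h n : R -> R),
    (forall t, 0 <= t < T -> continuous x t /\ continuous h t /\ continuous n t) ->
    (forall t, 0 <= t < T -> sqdist3 e1 e2 e3 (x t) (h t) (n t) < rho^2 ->
       is_derive x t (F1 (x t) (h t) (n t)) /\ is_derive h t (F2 (x t) (h t) (n t)) /\
       is_derive n t (F3 (x t) (h t) (n t))) ->
    sqdist3 e1 e2 e3 (x 0) (h 0) (n 0) < rho^2 / C ->
    forall t, 0 <= t < T ->
      sqdist3 e1 e2 e3 (x t) (h t) (n t) < rho^2 /\
      sqdist3 e1 e2 e3 (x t) (h t) (n t)
        <= C * sqdist3 e1 e2 e3 (x 0) (h 0) (n 0) * exp (- cc * t).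

(* Continuous induction keeps [D] below [rho2]: until the exit time [W] decays, and
   [D <= W <= C D] turns this into a bound on [D] that is still below [rho2]. *)
Lemma decay_of_comparable_energy (D W : R -> R) T rho2 cc C : 0 <= cc ->
  (forall t, 0 <= t < T -> continuous D t /\ continuous W t) ->
  (forall t, 0 <= D t /\ D t <= W t /\ W t <= C * D t) ->
  (forall t, 0 <= t < T -> D t < rho2 -> exists dW, is_derive W t dW /\ dW <= - cc * W t) ->
  C * D 0 < rho2 ->
  forall t, 0 <= t < T -> D t < rho2 /\ D t <= C * D 0 * exp (- cc * t).
Proof.
  intros Hcc Hcont HDW Hdiss H0.
  assert (Hdecay : forall s, 0 <= s < T -> (forall t, 0 <= t <= s -> D t < rho2) ->
                     W s <= W 0 * exp (- cc * s)).
  { intros s Hs Hin. apply le_exp_of_derive_le; [lra|].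
    intros t Ht. apply Hdiss; [lra | apply Hin; lra]. }
  assert (Hinside : forall t, 0 <= t < T -> D t < rho2).
  { apply continuous_induction; [apply Hcont | generalize (HDW 0); lra |].
    intros s Hs Hbefore.
    assert (HWs : W s <= W 0).
    { apply le_of_continuous_left; [lra | apply Hcont; lra |].
      intros t Ht. eapply Rle_trans; [apply Hdecay; [lra | intros; apply Hbefore; lra]|].
      assert (exp (- cc * t) <= 1) by (rewrite <- exp_0; apply exp_le_mono; nra).
      generalize (HDW 0). nra. }
    generalize (HDW s) (HDW 0). lra. }
  intros t Ht. split; [apply Hinside; auto|].
  assert (HWt : W t <= W 0 * exp (- cc * t)) by (apply Hdecay; auto; intros; apply Hinside; lra).
  assert (0 < exp (- cc * t)) by apply exp_pos.
  generalize (HDW t) (HDW 0). nra.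
Qed.

Lemma cascade_weights a0 g k K1 K2 : 0 < a0 -> 0 < g -> 0 < k ->
  exists B A, 1 <= B /\ 1 <= A /\
    K1^2 / (2 * a0) <= B * g / 4 /\ B * K2^2 / (2 * g) <= A * k / 2.
Proof.
  intros Ha Hg Hk.
  exists (2 * K1^2 / (a0 * g) + 1), ((2 * K1^2 / (a0 * g) + 1) * K2^2 / (g * k) + 1).
  assert (0 <= 2 * K1^2 / (a0 * g))
    by (apply Rmult_le_pos; [nra | left; apply Rinv_0_lt_compat; nra]).
  assert (0 <= (2 * K1^2 / (a0 * g) + 1) * K2^2 / (g * k))
    by (apply Rmult_le_pos; [nra | left; apply Rinv_0_lt_compat; nra]).
  split; [lra | split; [lra | split]].
  - replace ((2 * K1^2 / (a0 * g) + 1) * g / 4) with (K1^2 / (2 * a0) + g / 4) by (field; lra).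
    lra.
  - set (B := 2 * K1^2 / (a0 * g) + 1).
    replace ((B * K2^2 / (g * k) + 1) * k / 2) with (B * K2^2 / (2 * g) + k / 2) by (field; lra).
    lra.
Qed.

Lemma cascade_lyapunov_decay (F1 F2 F3 : R -> R -> R -> R) e1 e2 e3 rho a0 g k K1 K2 :
  0 < a0 -> 0 < g -> 0 < k -> 0 <= K1 -> 0 <= K2 ->
  (forall a b c, sqdist3 e1 e2 e3 a b c < rho^2 ->
     (a - e1) * F1 a b c <= - a0 * (a - e1)^2 + K1 * (Rabs (a - e1) * Rabs (b - e2)) /\
     (b - e2) * F2 a b c <= K2 * (Rabs (c - e3) * Rabs (b - e2)) - g * (b - e2)^2 /\
     (c - e3) * F3 a b c <= - k * (c - e3)^2) ->
  exists cc C, 0 < cc /\ 1 <= C /\ exp_decay_in_ball F1 F2 F3 e1 e2 e3 rho cc C.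
Proof.
  intros Ha Hg Hk HK1 HK2 HF.
  destruct (cascade_weights a0 g k K1 K2 Ha Hg Hk) as [B [A [HB [HA [HBw HAw]]]]].
  set (cc := Rmin a0 (Rmin (g / 2) k)).
  exists cc, (1 + B + A). split; [unfold cc; repeat apply Rmin_glb_lt; lra | split; [lra |]].
  intros T x h n Hcont Hder H0.
  apply (decay_of_comparable_energy (fun t => sqdist3 e1 e2 e3 (x t) (h t) (n t))
           (fun t => 1 * (x t - e1)^2 + B * (h t - e2)^2 + A * (n t - e3)^2));
    [left; unfold cc; repeat apply Rmin_glb_lt; lra | | | |].
  - intros t Ht. destruct (Hcont t Ht) as (Cx & Ch & Cn).
    split; [apply continuous_sqdist3 | apply continuous_weighted_sqdist3]; auto.
  - intros t. unfold sqdist3.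
    generalize (pow2_ge_0 (x t - e1)) (pow2_ge_0 (h t - e2)) (pow2_ge_0 (n t - e3)). nra.
  - intros t Ht Hin. destruct (Hder t Ht Hin) as (Dx & Dh & Dn).
    exists (2 * ((x t - e1) * F1 (x t) (h t) (n t) + B * ((h t - e2) * F2 (x t) (h t) (n t))
                 + A * ((n t - e3) * F3 (x t) (h t) (n t)))).
    split.
    + auto_derive; [repeat split; eexists; eauto|].
      replace (Derive (fun s : R => x s) t) with (F1 (x t) (h t) (n t))
        by (symmetry; apply is_derive_unique; auto).
      replace (Derive (fun s : R => h s) t) with (F2 (x t) (h t) (n t))
        by (symmetry; apply is_derive_unique; auto).
      replace (Derive (fun s : R => n s) t) with (F3 (x t) (h t) (n t))
        by (symmetry; apply is_derive_unique; auto).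
      ring.
    + destruct (HF _ _ _ Hin) as (J1 & J2 & J3).
      eapply Rle_trans; [apply (cascade_energy_dissipation _ _ _ _ _ _ a0 g k K1 K2 B A); eauto|].
      right. fold cc. ring.
  - apply Rmult_lt_reg_r with (/ (1 + B + A)); [apply Rinv_0_lt_compat; lra|].
    replace ((1 + B + A) * sqdist3 e1 e2 e3 (x 0) (h 0) (n 0) * / (1 + B + A))
      with (sqdist3 e1 e2 e3 (x 0) (h 0) (n 0)) by (field; lra).
    exact H0.
Qed.

Lemma exp_growth_while_positive (n : R -> R) T k : 0 < n 0 ->
  (forall t, 0 <= t < T -> continuous n t) ->
  (forall t, 0 <= t < T -> 0 < n t -> exists dn, is_derive n t dn /\ k * n t <= dn) ->
  forall t, 0 <= t < T -> n 0 * exp (k * t) <= n t.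
Proof.
  intros H0 Hc Hd.
  assert (Hgrow : forall s, 0 <= s < T -> (forall t, 0 <= t <= s -> 0 < n t) ->
                    n 0 * exp (k * s) <= n s).
  { intros s Hs Hpos.
    assert (H := le_exp_of_derive_le (fun t => - n t) (- k) s ltac:(lra)).
    replace (- - k * s) with (k * s) in H by ring.
    enough (- n s <= - n 0 * exp (k * s)) by lra. apply H.
    intros t Ht. destruct (Hd t ltac:(lra) (Hpos t Ht)) as [dn [Hn Hdn]].
    exists (- dn). split; [apply (is_derive_opp n t dn Hn) | lra]. }
  assert (Hpos : forall t, 0 <= t < T -> - n t < 0).
  { apply continuous_induction; [| lra |].
    - intros t Ht. apply (continuous_opp n t), Hc; auto.
    - intros s Hs Hbefore.
      assert (Hlow : n 0 - n s * exp (- k * s) <= 0).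
      { apply (le_of_continuous_left (fun t => n 0 - n t * exp (- k * t))); [lra | |].
        - apply (@continuous_minus R_UniformSpace R_AbsRing R_NormedModule);
            [apply continuous_const|].
          apply (@continuous_mult R_UniformSpace R_AbsRing); [apply Hc; lra|].
          apply (@ex_derive_continuous R_AbsRing R_NormedModule). auto_derive. auto.
        - intros t Ht. assert (H := Hgrow t ltac:(lra) ltac:(intros; apply Ropp_lt_cancel;
                                                      rewrite Ropp_0; apply Hbefore; lra)).
          assert (0 < exp (- k * t)) by apply exp_pos.
          replace (n 0) with (n 0 * exp (k * t) * exp (- k * t))
            by (rewrite Rmult_assoc, <- exp_plus; replace (k * t + - k * t) with 0 by ring;
                rewrite exp_0; ring).
          nra. }
      assert (0 < exp (- k * s)) by apply exp_pos.
      destruct (Rlt_dec 0 (n s)); [lra | nra]. }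
  intros t Ht. apply Hgrow; auto. intros t' Ht'. assert (- n t' < 0) by (apply Hpos; lra). lra.
Qed.

Lemma is_lim_of_sq_le_exp (f : R -> R) l C cc : 0 < cc -> 0 <= C ->
  (forall t, 0 <= t -> (f t - l)^2 <= C * exp (- cc * t)) -> is_lim f p_infty l.
Proof.
  intros Hcc HC H. apply is_lim_spec. intros eps. simpl.
  assert (He : 0 < eps) by apply cond_pos.
  set (q := eps^2 / (C + 1)).
  assert (Hq : 0 < q) by (unfold q; apply Rdiv_lt_0_compat; nra).
  exists (Rmax 0 (- ln q / cc)). intros t Ht.
  assert (Ht0 : 0 <= t) by (generalize (Rmax_l 0 (- ln q / cc)); lra).
  assert (Ht1 : - ln q / cc < t) by (generalize (Rmax_r 0 (- ln q / cc)); lra).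
  assert (Hexp : exp (- cc * t) < q).
  { rewrite <- (exp_ln q Hq). apply exp_increasing.
    apply Rmult_lt_compat_l with (r := cc) in Ht1; auto.
    replace (cc * (- ln q / cc)) with (- ln q) in Ht1 by (field; lra). lra. }
  specialize (H t Ht0).
  assert (Hsq : (f t - l)^2 < eps^2).
  { assert (0 < exp (- cc * t)) by apply exp_pos.
    apply Rle_lt_trans with ((C + 1) * exp (- cc * t)); [nra|].
    apply Rlt_le_trans with ((C + 1) * q); [apply Rmult_lt_compat_l; lra|].
    unfold q. right; field; lra. }
  rewrite <- pow2_abs in Hsq. assert (0 <= Rabs (f t - l)) by apply Rabs_pos. nra.
Qed.

Lemma dist3_sqdist3 a b c e1 e2 e3 : dist3 a b c e1 e2 e3 = sqrt (sqdist3 e1 e2 e3 a b c).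
Proof. reflexivity. Qed.

Lemma sol_on_continuous P T x h n : sol_on P T x h n ->
  forall t, 0 <= t < T -> continuous x t /\ continuous h t /\ continuous n t.
Proof.
  intros Hs t Ht. destruct (Hs t Ht) as (Dx & Dh & Dn).
  split; [|split]; eapply continuous_of_is_derive; eauto.
Qed.

Definition solutions_while_in_ball (P : params) (e1 e2 e3 rho : R) : Prop :=
  forall y1 y2 y3, exists x h n : R -> R, x 0 = y1 /\ h 0 = y2 /\ n 0 = y3 /\
    forall t, continuous x t /\ continuous h t /\ continuous n t /\
      (sqdist3 e1 e2 e3 (x t) (h t) (n t) < rho^2 ->
         is_derive x t (fx P (x t) (h t) (n t)) /\ is_derive h t (fh P (x t) (h t) (n t)) /\
         is_derive n t (fn P (x t) (h t) (n t))).

Lemma lyap_stable_of_exp_decay P xs rho cc C : 0 < rho -> 0 < cc -> 1 <= C ->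
  exp_decay_in_ball (fx P) (fh P) (fn P) xs 1 0 rho cc C -> lyap_stable P xs 1 0.
Proof.
  intros Hrho Hcc HC Hdecay eps Heps.
  set (q := Rmin (rho^2) (eps^2) / (2 * C)).
  assert (Hm1 := Rmin_l (rho^2) (eps^2)). assert (Hm2 := Rmin_r (rho^2) (eps^2)).
  assert (Hm : 0 < Rmin (rho^2) (eps^2)) by (apply Rmin_glb_lt; nra).
  assert (Hq : 0 < q) by (unfold q; apply Rdiv_lt_0_compat; lra).
  assert (HCq : C * q = Rmin (rho^2) (eps^2) / 2) by (unfold q; field; lra).
  exists (sqrt q). split; [apply sqrt_lt_R0; auto|].
  intros T x h n Hsol H0 t Ht.
  rewrite dist3_sqdist3 in *. apply sqrt_lt_0_alt in H0.
  assert (Hq0 := sqdist3_ge0 xs 1 0 (x 0) (h 0) (n 0)).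
  assert (Hin0 : sqdist3 xs 1 0 (x 0) (h 0) (n 0) < rho^2 / C).
  { apply Rlt_le_trans with q; auto. unfold q, Rdiv.
    apply Rmult_le_compat; try lra; [left; apply Rinv_0_lt_compat; lra|].
    apply Rinv_le_contravar; lra. }
  destruct (Hdecay T x h n (sol_on_continuous P T x h n Hsol) (fun t Ht _ => Hsol t Ht) Hin0 t Ht)
    as [_ Hbound].
  rewrite <- (sqrt_pow2 eps) by lra. apply sqrt_lt_1; [apply sqdist3_ge0 | nra |].
  assert (Hexp : exp (- cc * t) <= 1) by (rewrite <- exp_0; apply exp_le_mono; nra).
  assert (0 <= C * sqdist3 xs 1 0 (x 0) (h 0) (n 0)) by nra.
  assert (C * sqdist3 xs 1 0 (x 0) (h 0) (n 0) < C * q) by (apply Rmult_lt_compat_l; lra).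
  nra.
Qed.

Lemma loc_attractive_of_exp_decay P xs rho cc C : 0 < rho -> 0 < cc -> 1 <= C ->
  exp_decay_in_ball (fx P) (fh P) (fn P) xs 1 0 rho cc C ->
  solutions_while_in_ball P xs 1 0 rho -> loc_attractive P xs 1 0.
Proof.
  intros Hrho Hcc HC Hdecay Hsols.
  assert (HrC : 0 < rho^2 / C) by (apply Rdiv_lt_0_compat; nra).
  exists (sqrt (rho^2 / C)). split; [apply sqrt_lt_R0; auto|].
  intros x0 h0 n0 Hd. rewrite dist3_sqdist3 in Hd. apply sqrt_lt_0_alt in Hd.
  split.
  - destruct (Hsols x0 h0 n0) as [x [h [n [E1 [E2 [E3 Hx]]]]]].
    rewrite <- E1, <- E2, <- E3 in Hd.
    assert (Hin : forall t, 0 <= t -> sqdist3 xs 1 0 (x t) (h t) (n t) < rho^2).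
    { intros t Ht. refine (proj1 (Hdecay (t + 1) x h n _ _ Hd t _)); [| | lra].
      - intros s _. destruct (Hx s) as (Cx & Ch & Cn & _). auto.
      - intros s _ Hs. apply (Hx s). auto. }
    exists x, h, n. split; auto. intros t Ht. apply (Hx t). auto.
  - intros x h n Hsol E1 E2 E3. rewrite <- E1, <- E2, <- E3 in Hd.
    set (C0 := C * sqdist3 xs 1 0 (x 0) (h 0) (n 0)).
    assert (HC0 : 0 <= C0) by (apply Rmult_le_pos; [lra | apply sqdist3_ge0]).
    assert (Hb : forall t, 0 <= t -> sqdist3 xs 1 0 (x t) (h t) (n t) <= C0 * exp (- cc * t)).
    { intros t Ht.
      assert (Hs : sol_on P (t + 1) x h n) by (intros s Hs; apply Hsol; lra).
      refine (proj2 (Hdecay (t + 1) x h n (sol_on_continuous P _ x h n Hs)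
                       (fun s Hs' _ => Hs s Hs') Hd t _)). lra. }
    assert (Hcomp : forall t, 0 <= t -> (x t - xs)^2 <= C0 * exp (- cc * t) /\
                      (h t - 1)^2 <= C0 * exp (- cc * t) /\ (n t - 0)^2 <= C0 * exp (- cc * t)).
    { intros t Ht. specialize (Hb t Ht). unfold sqdist3 in Hb.
      generalize (pow2_ge_0 (x t - xs)) (pow2_ge_0 (h t - 1)) (pow2_ge_0 (n t - 0)). lra. }
    split; [|split]; apply (is_lim_of_sq_le_exp _ _ C0 cc); auto; intros t Ht; apply Hcomp; auto.
Qed.

Lemma exp_growth_reaches n0 k rho : 0 < n0 <= rho -> 0 < k ->
  exists t, 0 <= t /\ n0 * exp (k * t) = rho.
Proof.
  intros Hn0 Hk. exists (ln (rho / n0) / k). split.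
  - apply Rmult_le_pos; [|left; apply Rinv_0_lt_compat; lra].
    rewrite <- ln_1. apply ln_le; [lra|].
    apply Rmult_le_reg_r with n0; [lra|]. unfold Rdiv. rewrite Rmult_assoc, Rinv_l by lra. lra.
  - replace (k * (ln (rho / n0) / k)) with (ln (rho / n0)) by (field; lra).
    rewrite exp_ln by (apply Rdiv_lt_0_compat; lra). field. lra.
Qed.

(* Starting at [(xs, 1, n0)] with [n0 > 0], the tumour density grows at least like
   [n0 exp (k t)] as long as the solution stays in the ball, so it must leave the ball of
   radius [rho / 2], however small [n0] is. *)
Lemma unstable_of_escape P xs rho k : 0 < rho -> 0 < k ->
  (forall a b c, sqdist3 xs 1 0 a b c < rho^2 -> 0 < c -> k * c <= fn P a b c) ->
  solutions_while_in_ball P xs 1 0 rho -> unstable P xs 1 0.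
Proof.
  intros Hrho Hk Hgrow Hsols Hstable.
  destruct (Hstable (rho / 2)) as [d [Hd Hstab]]; [lra|].
  set (n0 := Rmin d rho / 2).
  assert (Hn0 : 0 < n0 /\ n0 < d /\ n0 < rho).
  { unfold n0. generalize (Rmin_l d rho) (Rmin_r d rho).
    assert (0 < Rmin d rho) by (apply Rmin_glb_lt; lra). lra. }
  destruct (Hsols xs 1 n0) as [x [h [n [E1 [E2 [E3 Hx]]]]]].
  set (D := fun t => sqdist3 xs 1 0 (x t) (h t) (n t)).
  assert (HD0 : D 0 = n0^2) by (unfold D, sqdist3; rewrite E1, E2, E3; ring).
  assert (Hdist0 : dist3 (x 0) (h 0) (n 0) xs 1 0 < d)
    by (rewrite dist3_sqdist3; fold (D 0); rewrite HD0, sqrt_pow2; lra).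
  assert (HcD : forall t, continuous D t).
  { intros t. destruct (Hx t) as (Cx & Ch & Cn & _). apply continuous_sqdist3; auto. }
  assert (Hin : forall T t, 0 <= t < T -> D t < rho^2).
  { intros T. apply continuous_induction; [intros; auto | rewrite HD0; nra |].
    intros s Hs Hbefore.
    assert (Hsol : sol_on P s x h n) by (intros t Ht; apply (Hx t), Hbefore; auto).
    assert (D s <= (rho / 2)^2); [|nra].
    apply le_of_continuous_left; [lra | auto |]. intros t Ht.
    specialize (Hstab s x h n Hsol Hdist0 t Ht). rewrite dist3_sqdist3 in Hstab.
    left. apply sqrt_lt_0_alt. rewrite sqrt_pow2 by lra. exact Hstab. }
  destruct (exp_growth_reaches n0 k rho) as [t1 [Ht1 Hreach]]; [lra | lra |].
  assert (Hn1 : n0 * exp (k * t1) <= n t1).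
  { rewrite <- E3. apply (exp_growth_while_positive n (t1 + 1) k); [lra | | | lra].
    - intros s _. apply (Hx s).
    - intros s Hs Hpos. exists (fn P (x s) (h s) (n s)). split.
      + apply (Hx s). apply (Hin (t1 + 1)). auto.
      + apply Hgrow; auto. apply (Hin (t1 + 1)). auto. }
  assert (H1 := Hin (t1 + 1) t1 ltac:(lra)). unfold D, sqdist3 in H1.
  generalize (pow2_ge_0 (x t1 - xs)) (pow2_ge_0 (h t1 - 1)). rewrite Rminus_0_r in H1. nra.
Qed.

(** * The model near E0 *)

Lemma mu_1 P : mu P 1 = mu0 P.
Proof. unfold mu, Rpower. rewrite ln_1, Rmult_0_r, exp_0. ring. Qed.

Lemma fn_factor P a b c : fn P a b c = c * (r P * (1 - c) - Dfun P b a).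
Proof. unfold fn. ring. Qed.

Lemma lip_bounded_dS P Dom l : params_pos P -> 0 < l ->
  (forall a b c, Dom a b c -> l <= b) -> lip_bounded_on Dom (fun _ b _ => b) ->
  lip_bounded_on Dom (fun _ b _ => dS P b).
Proof.
  intros HP Hl Hb Hp. unfold dS, Rdiv.
  assert (HR : lip_bounded_on Dom (fun _ b _ => Rpower b (m P)))
    by (apply (lip_bounded_Rpower Dom (fun _ b _ => b) (m P) l); auto).
  apply lip_bounded_mult; [apply lip_bounded_mult; [apply lip_bounded_const | auto]|].
  apply lip_bounded_inv with (m := Rpower (h50 P) (m P)); [apply exp_pos | |].
  - apply lip_bounded_plus; [apply lip_bounded_const | auto].
  - intros a b c _. generalize (exp_pos (m P * ln b)). unfold Rpower. lra.
Qed.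

(* On this cube [h >= 1/2] and [1 + eta n >= 1/2], so that all the powers and quotients in
   the model are Lipschitz there. *)
Definition rho_lip (P : params) : R := / (2 * (eta P + 1)).

Lemma rho_lip_spec P : params_pos P -> 0 < rho_lip P <= 1/2 /\ eta P * rho_lip P <= 1/2.
Proof.
  intros HP. assert (0 < eta P) by apply HP. unfold rho_lip. split; [split|].
  - apply Rinv_0_lt_compat; lra.
  - replace (1/2) with (/2) by field. apply Rinv_le_contravar; lra.
  - apply Rmult_le_reg_r with (2 * (eta P + 1)); [lra|].
    rewrite Rmult_assoc, Rinv_l by lra. lra.
Qed.

Ltac lip_bounded_auto :=
  repeat first [ assumption
               | apply lip_bounded_cube_fst | apply lip_bounded_cube_snd
               | apply lip_bounded_cube_thd
               | apply lip_bounded_const | apply lip_bounded_minus | apply lip_bounded_plus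
               | apply lip_bounded_mult | apply lip_bounded_opp ].

Lemma model_lip_bounded P xs : params_pos P ->
  let Dom := cube xs 1 0 (rho_lip P) in
  lip_bounded_on Dom (fx P) /\ lip_bounded_on Dom (fh P) /\ lip_bounded_on Dom (fn P) /\
  lip_bounded_on Dom (fun a b _ => Dfun P b a) /\
  lip_bounded_on Dom (fun a b _ => alpha P * (1 + beta P * a) * G P b).
Proof.
  intros HP Dom. destruct (rho_lip_spec P HP) as [Hrho Heta].
  assert (0 < Kg P /\ 0 < eta P) as [HKg Heta0] by (split; apply HP).
  assert (Hb : forall a b c, Dom a b c -> 1/2 <= b)
    by (intros a b c (_ & Hb & _); apply Rabs_le_between' in Hb; lra).
  assert (Hn : forall a b c, Dom a b c -> - rho_lip P <= c)
    by (intros a b c (_ & _ & Hc'); rewrite Rminus_0_r in Hc'; apply Rabs_le_between in Hc'; lra).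
  assert (HdS : lip_bounded_on Dom (fun _ b _ => dS P b))
    by (apply lip_bounded_dS with (l := 1/2); [auto | lra | auto | apply lip_bounded_cube_snd]).
  assert (HS : lip_bounded_on Dom (fun _ b _ => S P b)).
  { unfold S, Rdiv. lip_bounded_auto.
    apply lip_bounded_inv with (m := 1); [lra | lip_bounded_auto |].
    - apply (lip_bounded_exp Dom (fun _ b _ => - lam P * (b - hc P))). lip_bounded_auto.
    - intros. generalize (exp_pos (- lam P * (b - hc P))). lra. }
  assert (Hmu : lip_bounded_on Dom (fun _ b _ => mu P b)).
  { unfold mu. lip_bounded_auto.
    apply (lip_bounded_Rpower Dom (fun _ b _ => b) (p P) (1/2)); [lra | lip_bounded_auto | auto]. }
  assert (HG : lip_bounded_on Dom (fun _ b _ => G P b)).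
  { unfold G, Rdiv. lip_bounded_auto.
    apply lip_bounded_inv with (m := Kg P); [lra | lip_bounded_auto |].
    intros a b c H. generalize (Hb a b c H). lra. }
  assert (HGam : lip_bounded_on Dom (fun _ _ c => Gam P c)).
  { unfold Gam, Rdiv. lip_bounded_auto.
    apply lip_bounded_inv with (m := 1/2); [lra | lip_bounded_auto |].
    intros a b c H. assert (eta P * c >= - (eta P * rho_lip P)) by (generalize (Hn a b c H); nra).
    lra. }
  assert (HD : lip_bounded_on Dom (fun a b _ => Dfun P b a)) by (unfold Dfun; lip_bounded_auto).
  split; [|split; [|split; [|split]]]; auto; unfold fx, fh, fn; lip_bounded_auto.
Qed.

Definition near3 (e1 e2 e3 : R) (Q : R -> R -> R -> Prop) : Prop :=
  exists rho, 0 < rho /\ forall a b c, cube e1 e2 e3 rho a b c -> Q a b c.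

Lemma near3_and e1 e2 e3 (Q1 Q2 : R -> R -> R -> Prop) :
  near3 e1 e2 e3 Q1 -> near3 e1 e2 e3 Q2 -> near3 e1 e2 e3 (fun a b c => Q1 a b c /\ Q2 a b c).
Proof.
  intros [r1 [Hr1 H1]] [r2 [Hr2 H2]]. exists (Rmin r1 r2). split; [apply Rmin_glb_lt; auto|].
  intros a b c Hc.
  split; [apply H1 | apply H2]; eapply cube_mono; eauto; [apply Rmin_l | apply Rmin_r].
Qed.

Lemma near3_ball e1 e2 e3 (Q : R -> R -> R -> Prop) : near3 e1 e2 e3 Q ->
  exists rho, 0 < rho /\ forall a b c, sqdist3 e1 e2 e3 a b c < rho^2 -> Q a b c.
Proof.
  intros [rho [Hrho HQ]]. exists rho. split; auto. intros a b c Hin. apply HQ.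
  unfold sqdist3 in Hin. unfold cube.
  assert (Hsq : forall z, 0 <= z^2 -> z^2 <= (a - e1)^2 + (b - e2)^2 + (c - e3)^2 -> Rabs z <= rho).
  { intros z _ Hz. rewrite <- pow2_abs in Hz. assert (0 <= Rabs z) by apply Rabs_pos.
    generalize (pow2_ge_0 (a - e1)) (pow2_ge_0 (b - e2)) (pow2_ge_0 (c - e3)). nra. }
  generalize (pow2_ge_0 (a - e1)) (pow2_ge_0 (b - e2)) (pow2_ge_0 (c - e3)). intros.
  split; [|split]; apply Hsq; auto; lra.
Qed.

Section E0.

Variables (P : params) (xs : R).
Hypothesis HP : params_pos P.

Lemma near3_cube_rho_lip : near3 xs 1 0 (cube xs 1 0 (rho_lip P)).
Proof. exists (rho_lip P). split; [apply rho_lip_spec; auto | auto]. Qed.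

Lemma model_solutions_while_in_ball rho :
  (forall a b c, sqdist3 xs 1 0 a b c < rho^2 -> cube xs 1 0 (rho_lip P) a b c) ->
  solutions_while_in_ball P xs 1 0 rho.
Proof.
  intros Hball y1 y2 y3.
  destruct (rho_lip_spec P HP) as [Hrl _].
  destruct (model_lip_bounded P xs HP) as (Lx & Lh & Ln & _).
  destruct (clamped_global_solution xs 1 0 (rho_lip P) (fx P) (fh P) (fn P)
              ltac:(lra) Lx Lh Ln y1 y2 y3) as [x [h [n [E1 [E2 [E3 Hx]]]]]].
  exists x, h, n. split; [auto | split; [auto | split; [auto |]]].
  intros t. destruct (Hx t) as (Cx & Ch & Cn & Hd). split; [|split; [|split]]; auto.
Qed.

Lemma fh_lyapunov_near : exists g K2, 0 < g /\ 0 <= K2 /\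
  near3 xs 1 0 (fun a b c => (b - 1) * fh P a b c <= K2 * (Rabs c * Rabs (b - 1)) - g * (b - 1)^2).
Proof.
  destruct (rho_lip_spec P HP) as [Hrl Heta].
  destruct (model_lip_bounded P xs HP) as (_ & _ & _ & _ & [_ [B [_ [HB _]]]]).
  assert (0 < gamma0 P /\ 0 < eta P) as [Hg0 He] by (split; apply HP).
  exists (gamma0 P / 2), (Rabs B). split; [lra | split; [apply Rabs_pos |]].
  exists (rho_lip P). split; [lra|]. intros a b c Hin.
  unfold fh. set (v := b - 1). set (co := alpha P * (1 + beta P * a) * G P b).
  replace (v * (alpha P * c * (1 + beta P * a) * G P b - Gam P c * v))
    with (v * c * co - Gam P c * v^2) by (unfold co; ring).
  assert (Hcross : v * c * co <= Rabs B * (Rabs c * Rabs v)).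
  { eapply Rle_trans; [apply Rle_abs|]. rewrite !Rabs_mult.
    replace (Rabs B * (Rabs c * Rabs v)) with (Rabs v * Rabs c * Rabs B) by ring.
    apply Rmult_le_compat_l; [apply Rmult_le_pos; apply Rabs_pos|].
    eapply Rle_trans; [apply (HB a b c Hin) | apply Rle_abs]. }
  assert (HGam : gamma0 P / 2 <= Gam P c).
  { destruct Hin as (_ & _ & Hc). rewrite Rminus_0_r in Hc.
    assert (Rabs (eta P * c) <= 1/2).
    { rewrite Rabs_mult, (Rabs_pos_eq (eta P)) by lra.
      eapply Rle_trans; [apply Rmult_le_compat_l; [lra | apply Hc] | auto]. }
    apply Rabs_le_between in H.
    unfold Gam, Rdiv. apply Rmult_le_compat_l; [lra | apply Rinv_le_contravar; lra]. }
  assert (gamma0 P / 2 * v^2 <= Gam P c * v^2)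
    by (apply Rmult_le_compat_r; [apply pow2_ge_0 | auto]).
  lra.
Qed.

Lemma fn_rate_near eps : 0 < eps ->
  near3 xs 1 0 (fun a b c => Rabs ((r P * (1 - c) - Dfun P b a) - (r P - Dfun P 1 xs)) <= eps).
Proof.
  intros Heps. destruct (rho_lip_spec P HP) as [Hrl _].
  destruct (model_lip_bounded P xs HP) as (_ & _ & _ & [KD [_ [HKD [_ HD]]]] & _).
  assert (Hr : 0 < r P) by apply HP.
  set (rho := Rmin (rho_lip P) (eps / (r P + 3 * KD + 1))).
  assert (Hrho1 : rho <= rho_lip P) by apply Rmin_l.
  assert (Hrho2 : (r P + 3 * KD + 1) * rho <= eps).
  { apply Rle_trans with ((r P + 3 * KD + 1) * (eps / (r P + 3 * KD + 1))).
    - apply Rmult_le_compat_l; [lra | apply Rmin_r].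
    - right; field; lra. }
  assert (Hrho : 0 < rho) by (apply Rmin_glb_lt; [lra | apply Rdiv_lt_0_compat; lra]).
  exists rho. split; [auto|]. intros a b c Hin.
  assert (HE0 : cube xs 1 0 (rho_lip P) xs 1 0)
    by (unfold cube; rewrite !Rminus_diag, Rabs_R0; lra).
  assert (HDab := HD a b c xs 1 0 (cube_mono _ _ _ _ _ _ _ _ Hrho1 Hin) HE0).
  destruct Hin as (Ha & Hb & Hc). rewrite Rminus_0_r in Hc.
  cbv beta in HDab. unfold l1_dist3 in HDab. rewrite Rminus_0_r in HDab.
  replace (r P * (1 - c) - Dfun P b a - (r P - Dfun P 1 xs))
    with (- (r P * c) - (Dfun P b a - Dfun P 1 xs)) by ring.
  eapply Rle_trans; [apply Rabs_triang|].
  rewrite Rabs_Ropp, Rabs_Ropp, Rabs_mult, (Rabs_pos_eq (r P)) by lra.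
  assert (r P * Rabs c <= r P * rho) by (apply Rmult_le_compat_l; lra).
  assert (KD * (Rabs (a - xs) + Rabs (b - 1) + Rabs c) <= KD * (3 * rho))
    by (apply Rmult_le_compat_l; lra).
  assert (0 <= KD * rho) by (apply Rmult_le_pos; lra).
  nra.
Qed.

Lemma E0_unstable : r P > Dfun P 1 xs -> unstable P xs 1 0.
Proof.
  intros HrD.
  set (k := (r P - Dfun P 1 xs) / 2).
  assert (Hk : 0 < k) by (unfold k; lra).
  destruct (near3_ball _ _ _ _ (near3_and _ _ _ _ _ (fn_rate_near k Hk)
              near3_cube_rho_lip)) as [rho [Hrho Hball]].
  apply (unstable_of_escape P xs rho k); auto.
  - intros a b c Hin Hc. destruct (Hball a b c Hin) as [Hn _].
    rewrite fn_factor, (Rmult_comm k). apply Rmult_le_compat_l; [lra|].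
    apply Rabs_le_between in Hn. unfold k in *. lra.
  - apply model_solutions_while_in_ball; auto. intros; apply Hball; auto.
Qed.

Hypothesis Hxs : 0 < xs < 1.
Hypothesis Hxs_eq : xs * (1 - xs) * S P 1 + mu0 P * (1 - xs) - nu P * xs = 0.

(* [(1 - 2 xs) S(1) - mu0 - nu] is the derivative of [fx] in [x] at [E0]; evaluating the
   equilibrium equation at [xs] and [1 - xs] shows it is negative whatever the sign of [S(1)]. *)
Lemma fx_linear_rate_neg : (1 - 2 * xs) * S P 1 - mu0 P - nu P < 0.
Proof.
  assert (0 < mu0 P /\ 0 < nu P) as [Hmu0 Hnu] by (split; apply HP).
  set (S1 := S P 1) in *. set (ax := (1 - 2 * xs) * S1 - mu0 P - nu P).
  assert (E0 : ax * xs = - mu0 P - S1 * xs^2) by (unfold ax; nra).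
  assert (E1 : ax * (1 - xs) = - nu P + S1 * (1 - xs)^2) by (unfold ax; nra).
  destruct (Rle_dec 0 S1).
  - assert (0 <= S1 * xs^2) by (apply Rmult_le_pos; [auto | apply pow2_ge_0]). nra.
  - assert (S1 * (1 - xs)^2 <= 0) by (assert (0 <= (1 - xs)^2) by apply pow2_ge_0; nra). nra.
Qed.

Lemma fx_h1 a c :
  fx P a 1 c = ((1 - 2 * xs) * S P 1 - mu0 P - nu P) * (a - xs) - S P 1 * (a - xs)^2.
Proof.
  unfold fx. rewrite mu_1.
  transitivity (((1 - 2 * xs) * S P 1 - mu0 P - nu P) * (a - xs) - S P 1 * (a - xs)^2
                + (xs * (1 - xs) * S P 1 + mu0 P * (1 - xs) - nu P * xs)); [ring|].
  rewrite Hxs_eq. ring.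
Qed.

(* Compare [fx] with [fx (., 1, .)], which [fx_h1] makes explicit; the difference is
   Lipschitz in [h - 1]. *)
Lemma fx_lyapunov_near : exists a0 K1, 0 < a0 /\ 0 <= K1 /\
  near3 xs 1 0 (fun a b c =>
    (a - xs) * fx P a b c <= - a0 * (a - xs)^2 + K1 * (Rabs (a - xs) * Rabs (b - 1))).
Proof.
  destruct (rho_lip_spec P HP) as [Hrl _].
  destruct (model_lip_bounded P xs HP) as [[K1 [_ [HK1 [_ Hfx]]]] _].
  set (S1 := S P 1). set (ax := (1 - 2 * xs) * S1 - mu0 P - nu P).
  assert (Hax : ax < 0) by apply fx_linear_rate_neg.
  exists (- ax / 2), K1. split; [lra | split; [auto |]].
  exists (Rmin (rho_lip P) ((- ax / 2) / (Rabs S1 + 1))).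
  assert (HS1 : 0 < Rabs S1 + 1) by (generalize (Rabs_pos S1); lra).
  split; [apply Rmin_glb_lt; [lra | apply Rdiv_lt_0_compat; lra]|].
  intros a b c Hin.
  assert (Hlip : cube xs 1 0 (rho_lip P) a b c) by (eapply cube_mono; [apply Rmin_l | eauto]).
  assert (Hu : Rabs S1 * Rabs (a - xs) <= - ax / 2).
  { destruct Hin as [Ha _]. assert (Hr := Rmin_r (rho_lip P) ((- ax / 2) / (Rabs S1 + 1))).
    apply Rle_trans with ((Rabs S1 + 1) * ((- ax / 2) / (Rabs S1 + 1))).
    - apply Rmult_le_compat; try apply Rabs_pos; lra.
    - right; field; lra. }
  assert (Hd : Rabs (fx P a b c - fx P a 1 c) <= K1 * Rabs (b - 1)).
  { eapply Rle_trans; [apply Hfx; auto|].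
    - destruct Hlip as (H1 & _ & H3). split; [auto | split; [| auto]].
      rewrite Rminus_diag, Rabs_R0. lra.
    - right. unfold l1_dist3. rewrite !Rminus_diag, Rabs_R0. ring. }
  rewrite fx_h1 in Hd. fold S1 ax in Hd.
  set (u := a - xs) in *. set (v := b - 1) in *.
  set (d := fx P a b c - (ax * u - S1 * u^2)) in *.
  replace (fx P a b c) with (ax * u - S1 * u^2 + d) by (unfold d; ring).
  assert (Hud : u * d <= K1 * (Rabs u * Rabs v)).
  { eapply Rle_trans; [apply Rle_abs|]. rewrite Rabs_mult.
    replace (K1 * (Rabs u * Rabs v)) with (Rabs u * (K1 * Rabs v)) by ring.
    apply Rmult_le_compat_l; [apply Rabs_pos | auto]. }
  assert (Hcub : - S1 * u * u^2 <= - ax / 2 * u^2).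
  { apply Rmult_le_compat_r; [apply pow2_ge_0|].
    eapply Rle_trans; [apply Rle_abs|]. rewrite Rabs_mult, Rabs_Ropp. auto. }
  replace (u * (ax * u - S1 * u^2 + d)) with (ax * u^2 + (- S1 * u * u^2) + u * d) by ring.
  lra.
Qed.

Lemma E0_loc_asymp_stable : r P < Dfun P 1 xs -> loc_asymp_stable P xs 1 0.
Proof.
  intros HrD.
  destruct fx_lyapunov_near as [a0 [K1 [Ha0 [HK1 Nx]]]].
  destruct fh_lyapunov_near as [g [K2 [Hg [HK2 Nh]]]].
  set (k := (Dfun P 1 xs - r P) / 2).
  assert (Hk : 0 < k) by (unfold k; lra).
  assert (Nn := fn_rate_near k Hk).
  destruct (near3_ball _ _ _ _ (near3_and _ _ _ _ _ Nx (near3_and _ _ _ _ _ Nh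
              (near3_and _ _ _ _ _ Nn near3_cube_rho_lip)))) as [rho [Hrho Hball]].
  destruct (cascade_lyapunov_decay (fx P) (fh P) (fn P) xs 1 0 rho a0 g k K1 K2)
    as [cc [C [Hcc [HC Hdecay]]]]; auto.
  { intros a b c Hin. destruct (Hball a b c Hin) as (Hx & Hh & Hn & _).
    rewrite !Rminus_0_r. split; [auto | split; [auto |]].
    rewrite fn_factor. apply Rabs_le_between in Hn.
    replace (c * (c * (r P * (1 - c) - Dfun P b a))) with (c^2 * (r P * (1 - c) - Dfun P b a))
      by ring.
    replace (- k * c^2) with (c^2 * (- k)) by ring.
    apply Rmult_le_compat_l; [apply pow2_ge_0 | unfold k in *; lra]. }
  assert (Hsols : solutions_while_in_ball P xs 1 0 rho)
    by (apply model_solutions_while_in_ball; auto; intros; apply Hball; auto).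
  split; [apply (lyap_stable_of_exp_decay P xs rho cc C)
         | apply (loc_attractive_of_exp_decay P xs rho cc C)]; auto.
Qed.

End E0.

Theorem theorem2 (P : params) (xs : R) :
  params_pos P ->
  0 < xs < 1 ->
  xs * (1 - xs) * S P 1 + mu0 P * (1 - xs) - nu P * xs = 0 ->
  0 < Dfun P 1 xs ->
  (Rnum0 P xs < 1 -> loc_asymp_stable P xs 1 0) /\
  (Rnum0 P xs > 1 -> unstable P xs 1 0).
Proof.
  intros HP Hxs Hxs_eq HD.
  assert (Hr : r P = Rnum0 P xs * Dfun P 1 xs) by (unfold Rnum0; field; lra).
  split; intros HR0.
  - apply E0_loc_asymp_stable; auto. nra.
  - apply E0_unstable; auto. nra.
Qed.
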